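(* Let $\Gamma$ be a connected $\mathbf{Top}$-graph with more than one vertex, let $T\subseteq\Gamma$ be a maximal tree, and let $v\in\Gamma_0$. Let $\Gamma/T$ be the quotient space of the edge space $\Gamma$ obtained by collapsing the (nonempty) edge set $T$ to a single point, taken as basepoint $\ast$. Then the vertex group $\mathscr F(\Gamma)(v)=\mathscr F(\Gamma)(v,v)$ of the free $\mathbf{Top}$-groupoid is isomorphic, as a topological group, to the free Graev topological group $F_G(\Gamma/T,\ast)$.
   Context: A $\mathbf{Top}$-graph $\Gamma$ consists of a discrete vertex space $\Gamma_0$, an edge space $\Gamma$ and continuous maps $\partial_0,\partial_1:\Gamma\to\Gamma_0$; $\Gamma(x,y)=\partial_0^{-1}(x)\cap\partial_1^{-1}(y)$. Its realization is $|\Gamma|=\Gamma_0\sqcup(\Gamma\times[0,1])/((\alpha,i)\sim\partial_i(\alpha))$; $\Gamma$ is connected if $|\Gamma|$ is path connected. A tree is a $\mathbf{Top}$-graph with discrete edge space and contractible realization; a maximal tree in $\Gamma$ is a sub-$\mathbf{Top}$-graph $T$ which is a tree with $T_0=\Gamma_0$. A $\mathbf{Top}$-groupoid is a groupoid with discrete object set, topologized hom-sets, and continuous composition and inversion. The free $\mathbf{Top}$-groupoid $\mathscr F(\Gamma)$ is the $\mathbf{Top}$-groupoid with objects $\Gamma_0$ and a $\mathbf{Top}$-graph morphism $\sigma:\Gamma\to\mathscr F(\Gamma)$ such that every $\mathbf{Top}$-graph morphism from $\Gamma$ into a $\mathbf{Top}$-groupoid extends uniquely to a functor $\mathscr F(\Gamma)\to\mathcal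 G$ continuous on hom-spaces. The free Graev topological group $F_G(X,\ast)$ is the topological group with continuous $\sigma_\ast:X\to F_G(X,\ast)$, $\sigma_\ast(\ast)=e$, universal for continuous based maps into topological groups. *)

From Stdlib Require Import Reals.
Set Implicit Arguments.
Open Scope R_scope.

Definition Opens (X : Type) := (X -> Prop) -> Prop.

Definition is_topology (X : Type) (O : Opens X) : Prop :=
  O (fun _ => True) /\
  (forall U V, O U -> O V -> O (fun x => U x /\ V x)) /\
  (forall F : (X -> Prop) -> Prop, (forall U, F U -> O U) ->
     O (fun x => exists U, F U /\ U x)).

Definition discrete_open (X : Type) : Opens X := fun _ => True.

Definition continuous (X Y : Type) (OX : Opens X) (OY : Opens Y) (f : X -> Y) : Prop :=
  forall V, OY V -> OX (fun x => V (f x)).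

Definition prod_open (X Y : Type) (OX : Opens X) (OY : Opens Y) : Opens (X * Y) :=
  fun W => forall p, W p -> exists U V, OX U /\ OY V /\ U (fst p) /\ V (snd p) /\
                     (forall a b, U a -> V b -> W (a, b)).

Definition sub_open (X : Type) (OX : Opens X) (P : X -> Prop) : Opens {x : X | P x} :=
  fun W => exists U, OX U /\ forall z : {x : X | P x}, W z <-> U (proj1_sig z).

Definition sum_open (X Y : Type) (OX : Opens X) (OY : Opens Y) : Opens (X + Y) :=
  fun W => OX (fun x => W (inl x)) /\ OY (fun y => W (inr y)).

Definition is_quotient_map (X Q : Type) (OX : Opens X) (OQ : Opens Q) (q : X -> Q) : Prop :=
  (forall y, exists x, q x = y) /\ (forall V, OQ V <-> OX (fun x => V (q x))).

Definition R_open : Opens R :=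
  fun U => forall x, U x -> exists e, 0 < e /\ forall y, Rabs (y - x) < e -> U y.

Definition unit_interval := {r : R | 0 <= r <= 1}.
Definition I_open : Opens unit_interval := @sub_open R R_open (fun r : R => 0 <= r <= 1).
Definition I0 : unit_interval := exist _ 0 (conj (Rle_refl 0) Rle_0_1).
Definition I1 : unit_interval := exist _ 1 (conj Rle_0_1 (Rle_refl 1)).

Definition path_connected (X : Type) (OX : Opens X) : Prop :=
  forall x y, exists g : unit_interval -> X,
    continuous I_open OX g /\ g I0 = x /\ g I1 = y.

Definition contractible (X : Type) (OX : Opens X) : Prop :=
  exists (x0 : X) (H : X * unit_interval -> X),
    continuous (prod_open OX I_open) OX H /\
    forall x, H (x, I0) = x /\ H (x, I1) = x0.

(** * Top-graphs: discrete vertex type V0, edge space E with topology OE,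
      continuous source/target maps d0 d1 : E -> V0. *)

Definition is_topgraph (V0 E : Type) (OE : Opens E) (d0 d1 : E -> V0) : Prop :=
  is_topology OE /\ continuous OE (@discrete_open V0) d0 /\
  continuous OE (@discrete_open V0) d1.

(* x is the vertex represented by a point of V0 ⊔ (E × [0,1]) *)
Definition real_vertex (V0 E : Type) (d0 d1 : E -> V0)
    (p : V0 + (E * unit_interval)) (x : V0) : Prop :=
  p = inl x \/
  exists a r, p = inr (a, r) /\
    ((proj1_sig r = 0 /\ d0 a = x) \/ (proj1_sig r = 1 /\ d1 a = x)).

(* the equivalence relation (α,i) ~ ∂_i(α) *)
Definition real_rel (V0 E : Type) (d0 d1 : E -> V0)
    (p p' : V0 + (E * unit_interval)) : Prop :=
  p = p' \/ exists x, real_vertex d0 d1 p x /\ real_vertex d0 d1 p' x.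

(* (Q, OQ, q) is a model of the realization |Γ| *)
Definition is_realization (V0 E : Type) (OE : Opens E) (d0 d1 : E -> V0)
    (Q : Type) (OQ : Opens Q) (q : V0 + (E * unit_interval) -> Q) : Prop :=
  is_quotient_map (sum_open (@discrete_open V0) (prod_open OE I_open)) OQ q /\
  forall p p', q p = q p' <-> real_rel d0 d1 p p'.

Definition graph_connected (V0 E : Type) (OE : Opens E) (d0 d1 : E -> V0) : Prop :=
  exists (Q : Type) (OQ : Opens Q) (q : V0 + (E * unit_interval) -> Q),
    is_realization OE d0 d1 OQ q /\ path_connected OQ.

(* T ⊆ E is a maximal tree: the sub-Top-graph with all vertices and edge
   set T (subspace topology) has discrete edge space and contractible
   realization. *)
Definition maximal_tree (V0 E : Type) (OE : Opens E) (d0 d1 : E -> V0)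
    (T : E -> Prop) : Prop :=
  (forall W, sub_open OE T W) /\
  exists (Q : Type) (OQ : Opens Q) (q : V0 + ({a : E | T a} * unit_interval) -> Q),
    is_realization (sub_open OE T) (fun a => d0 (proj1_sig a))
                   (fun a => d1 (proj1_sig a)) OQ q /\
    contractible OQ.

(** * Top-groupoids, given by the total space M of morphisms (topologized so
    that hom-spaces M(x,y) carry the subspace topology and are clopen),
    source s, target t, composition comp f g ("f then g", defined when
    t f = s g), identities idm and inverses inv. *)

Definition is_topgroupoid (O M : Type) (OM : Opens M) (s t : M -> O)
    (comp : M -> M -> M) (idm : O -> M) (inv : M -> M) : Prop :=
  is_topology OM /\
  continuous OM (@discrete_open O) s /\ continuous OM (@discrete_open O) t /\
  (forall x, s (idm x) = x /\ t (idm x) = x) /\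
  (forall f g, t f = s g -> s (comp f g) = s f /\ t (comp f g) = t g) /\
  (forall f g h, t f = s g -> t g = s h -> comp (comp f g) h = comp f (comp g h)) /\
  (forall f, comp (idm (s f)) f = f /\ comp f (idm (t f)) = f) /\
  (forall f, s (inv f) = t f /\ t (inv f) = s f /\
             comp f (inv f) = idm (s f) /\ comp (inv f) f = idm (t f)) /\
  continuous (sub_open (prod_open OM OM) (fun p => t (fst p) = s (snd p))) OM
             (fun p => comp (fst (proj1_sig p)) (snd (proj1_sig p))) /\
  continuous OM OM inv.

Definition graph_morphism (V0 E : Type) (OE : Opens E) (d0 d1 : E -> V0)
    (O' M' : Type) (OM' : Opens M') (s' t' : M' -> O')
    (fo : V0 -> O') (f : E -> M') : Prop :=
  continuous OE OM' f /\ (forall a, s' (f a) = fo (d0 a) /\ t' (f a) = fo (d1 a)).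

Definition is_functor (O M : Type) (s t : M -> O) (comp : M -> M -> M) (idm : O -> M)
    (O' M' : Type) (s' t' : M' -> O') (comp' : M' -> M' -> M') (idm' : O' -> M')
    (fo : O -> O') (F : M -> M') : Prop :=
  (forall m, s' (F m) = fo (s m) /\ t' (F m) = fo (t m)) /\
  (forall f g, t f = s g -> F (comp f g) = comp' (F f) (F g)) /\
  (forall x, F (idm x) = idm' (fo x)).

Definition is_free_topgroupoid (V0 E : Type) (OE : Opens E) (d0 d1 : E -> V0)
    (M : Type) (OM : Opens M) (s t : M -> V0) (comp : M -> M -> M)
    (idm : V0 -> M) (inv : M -> M) (sigma : E -> M) : Prop :=
  is_topgroupoid OM s t comp idm inv /\
  graph_morphism OE d0 d1 OM s t (fun x => x) sigma /\
  forall (O' M' : Type) (OM' : Opens M') (s' t' : M' -> O') (comp' : M' -> M' -> M')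
         (idm' : O' -> M') (inv' : M' -> M'),
    is_topgroupoid OM' s' t' comp' idm' inv' ->
    forall (fo : V0 -> O') (f : E -> M'),
      graph_morphism OE d0 d1 OM' s' t' fo f ->
      exists F : M -> M',
        is_functor s t comp idm s' t' comp' idm' fo F /\ continuous OM OM' F /\
        (forall a, F (sigma a) = f a) /\
        (forall F' : M -> M',
           is_functor s t comp idm s' t' comp' idm' fo F' -> continuous OM OM' F' ->
           (forall a, F' (sigma a) = f a) -> forall m, F' m = F m).

Definition is_topgroup (G : Type) (OG : Opens G) (mul : G -> G -> G) (inv : G -> G)
    (e : G) : Prop :=
  is_topology OG /\
  (forall x y z, mul (mul x y) z = mul x (mul y z)) /\
  (forall x, mul e x = x /\ mul x e = x) /\
  (forall x, mul x (inv x) = e /\ mul (inv x) x = e) /\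
  continuous (prod_open OG OG) OG (fun p => mul (fst p) (snd p)) /\
  continuous OG OG inv.

Definition group_hom (G H : Type) (mulG : G -> G -> G) (mulH : H -> H -> H)
    (phi : G -> H) : Prop :=
  forall x y, phi (mulG x y) = mulH (phi x) (phi y).

Definition is_free_graev (X : Type) (OX : Opens X) (star : X)
    (F : Type) (OF : Opens F) (mulF : F -> F -> F) (invF : F -> F) (eF : F)
    (sigma : X -> F) : Prop :=
  is_topgroup OF mulF invF eF /\ continuous OX OF sigma /\ sigma star = eF /\
  forall (H : Type) (OH : Opens H) (mulH : H -> H -> H) (invH : H -> H) (eH : H),
    is_topgroup OH mulH invH eH ->
    forall f : X -> H, continuous OX OH f -> f star = eH ->
      exists phi : F -> H,
        group_hom mulF mulH phi /\ continuous OF OH phi /\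
        (forall x, phi (sigma x) = f x) /\
        (forall phi' : F -> H, group_hom mulF mulH phi' -> continuous OF OH phi' ->
           (forall x, phi' (sigma x) = f x) -> forall y, phi' y = phi y).

Definition is_collapse (E : Type) (OE : Opens E) (T : E -> Prop)
    (Q : Type) (OQ : Opens Q) (q : E -> Q) : Prop :=
  is_quotient_map OE OQ q /\ forall a b, q a = q b <-> (a = b \/ (T a /\ T b)).

(* Let T be a maximal tree of the Top-graph Γ, v a vertex, M = F(Γ) the free
   Top-groupoid and F = F_G(Γ/T, * ) the free Graev group.  Choose for every
   vertex x the tree path τ(x) : v → x.  The isomorphism M(v) ≅ F is built from
   the two universal properties:
   - Φ : M → F is the functor (F seen as a one-object groupoid) extending
     a ↦ σ_F(q a); it kills tree edges, hence every τ(x).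
   - ψ : F → M(v) is the homomorphism extending q a ↦ τ(d0 a) σ(a) τ(d1 a)⁻¹,
     which is well defined on Γ/T because this loop is trivial for tree edges.
   ψ ∘ Φ = id on M(v) because m ↦ τ(s m)⁻¹ ψ(Φ m) τ(t m) is a continuous
   endofunctor of M fixing σ, and Φ ∘ ψ = id by uniqueness in the Graev property.
   The only non-formal input is that the tree paths τ(x) exist and are unique:
   contractibility of |T| gives connectivity, and it gives, for every tree edge
   e, a "potential" h : Γ0 → ℝ jumping by 1 along e and constant along the other
   tree edges (a lift to ℝ of the map |T| → ℝ/ℤ winding once around e), which
   rules out reduced cycles. *)

From Stdlib Require Import Reals Lra Lia Rtopology ClassicalEpsilon ProofIrrelevance
  List FunctionalExtensionality PropExtensionality.
Open Scope R_scope.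

(** * Point-set topology *)

Lemma open_ext {X} (O : Opens X) (U U' : X -> Prop) :
  O U -> (forall x, U x <-> U' x) -> O U'.
Proof.
  intros HU HUU'. replace U' with U; auto.
  extensionality x. apply propositional_extensionality, HUU'.
Qed.

Lemma open_of_local {X} (O : Opens X) (HO : is_topology O) (P : X -> Prop) :
  (forall x, P x -> exists S, O S /\ S x /\ forall y, S y -> P y) -> O P.
Proof.
  intro HP. destruct HO as [_ [_ Hunion]].
  apply (open_ext O (fun x => exists U, (O U /\ forall y, U y -> P y) /\ U x)).
  - apply Hunion. intros U [HU _]. exact HU.
  - intro x. split.
    + intros [U [[_ HUP] Hx]]. auto.
    + intro Hx. destruct (HP x Hx) as [S [HS [Sx HSP]]]. exists S. auto.
Qed.

Lemma open_empty {X} (O : Opens X) : is_topology O -> O (fun _ => False).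
Proof.
  intros [_ [_ Hunion]]. apply (open_ext O (fun x => exists U, False /\ U x)).
  - apply Hunion. intros U [].
  - intro x. split; [intros [U [[] _]]|intros []].
Qed.

Lemma sub_topology {X} (O : Opens X) (P : X -> Prop) :
  is_topology O -> is_topology (sub_open O P).
Proof.
  intros [Hfull [Hinter Hunion]]. split; [|split].
  - exists (fun _ => True). split; auto. intro; tauto.
  - intros U V [U' [HU' EU]] [V' [HV' EV]]. exists (fun x => U' x /\ V' x).
    split; auto. intro z. rewrite EU, EV. tauto.
  - intros Fm HFm.
    exists (fun x => exists U0, (O U0 /\ exists W, Fm W /\
                                 forall z, W z <-> U0 (proj1_sig z)) /\ U0 x).
    split.
    + apply Hunion. intros U0 [HU0 _]. exact HU0.
    + intro z. split.
      * intros [W [HW Wz]]. destruct (HFm W HW) as [U0 [HU0 E0]].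
        exists U0. split; [split; eauto|]. apply E0, Wz.
      * intros [U0 [[_ [W [HW E0]]] Hz]]. exists W. split; auto. apply E0, Hz.
Qed.

Lemma cont_comp {X Y Z} (OX : Opens X) (OY : Opens Y) (OZ : Opens Z)
  (f : X -> Y) (g : Y -> Z) :
  continuous OX OY f -> continuous OY OZ g -> continuous OX OZ (fun x => g (f x)).
Proof. intros Hf Hg V HV. exact (Hf _ (Hg V HV)). Qed.

Lemma cont_through_discrete {X Y Z} (OX : Opens X) (OZ : Opens Z) (f : X -> Y) (h : Y -> Z) :
  continuous OX (@discrete_open Y) f -> continuous OX OZ (fun x => h (f x)).
Proof. intros Hf. apply (cont_comp _ _ _ f h Hf). intros V _. exact I. Qed.

Lemma cont_to_unit {X} (OX : Opens X) : is_topology OX ->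
  continuous OX (@discrete_open unit) (fun _ => tt).
Proof.
  intros HX V _. destruct (classic (V tt)) as [Htt|Htt].
  - apply (open_ext _ _ _ (proj1 HX)). intro; tauto.
  - apply (open_ext _ _ _ (open_empty OX HX)). intro; tauto.
Qed.

Lemma cont_val {X} (OX : Opens X) (P : X -> Prop) :
  continuous (sub_open OX P) OX (@proj1_sig X P).
Proof. intros V HV. exists V. split; auto. intro; tauto. Qed.

Lemma cont_into_sub {X Y} (OX : Opens X) (OY : Opens Y) (P : Y -> Prop) (f : X -> {y | P y}) :
  continuous OX OY (fun x => proj1_sig (f x)) -> continuous OX (sub_open OY P) f.
Proof.
  intros Hf W [U [HU HW]]. apply (open_ext _ _ _ (Hf U HU)). intro x. symmetry. apply HW.
Qed.

(** * Real numbers modulo 1 *)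

Definition cong1 (a b : R) : Prop := exists k : Z, a - b = IZR k.
Definition near1 (e a b : R) : Prop := exists k : Z, Rabs (a - b - IZR k) < e.

Lemma int_abs_lt1 (k : Z) : Rabs (IZR k) < 1 -> k = 0%Z.
Proof.
  intro Hk. assert (Hb : IZR (-1) < IZR k < IZR 1) by (simpl; split_Rabs; lra).
  destruct Hb as [H1 H2]. apply lt_IZR in H1. apply lt_IZR in H2. lia.
Qed.

Lemma cong1_refl a : cong1 a a.
Proof. exists 0%Z. simpl. ring. Qed.

Lemma cong1_sym a b : cong1 a b -> cong1 b a.
Proof. intros [k Hk]. exists (- k)%Z. rewrite opp_IZR. lra. Qed.

Lemma cong1_trans a b c : cong1 a b -> cong1 b c -> cong1 a c.
Proof. intros [k Hk] [j Hj]. exists (k + j)%Z. rewrite plus_IZR. lra. Qed.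

Lemma cong1_01 a b : (a = 0 \/ a = 1) -> (b = 0 \/ b = 1) -> cong1 a b.
Proof.
  intros [-> | ->] [-> | ->]; [exists 0%Z|exists (-1)%Z|exists 1%Z|exists 0%Z]; simpl; ring.
Qed.

Lemma near1_refl e a : 0 < e -> near1 e a a.
Proof. intro He. exists 0%Z. replace (a - a - IZR 0) with 0 by (simpl; ring).
  rewrite Rabs_R0. exact He. Qed.

Lemma near1_sym e a b : near1 e a b -> near1 e b a.
Proof.
  intros [k Hk]. exists (- k)%Z. rewrite opp_IZR.
  replace (b - a - - IZR k) with (- (a - b - IZR k)) by ring. now rewrite Rabs_Ropp.
Qed.

Lemma near1_trans e d a b c : near1 e a b -> near1 d b c -> near1 (e + d) a c.
Proof.
  intros [k Hk] [j Hj]. exists (k + j)%Z. rewrite plus_IZR.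
  replace (a - c - (IZR k + IZR j)) with ((a - b - IZR k) + (b - c - IZR j)) by ring.
  eapply Rle_lt_trans; [apply Rabs_triang|lra].
Qed.

Lemma near1_shift e a b c : near1 e a b -> near1 e (a - c) (b - c).
Proof.
  intros [k Hk]. exists k.
  now replace (a - c - (b - c) - IZR k) with (a - b - IZR k) by ring.
Qed.

Lemma near1_cong e a a' b b' : cong1 a a' -> cong1 b b' -> near1 e a b -> near1 e a' b'.
Proof.
  intros [i Hi] [j Hj] [k Hk]. exists (k - i + j)%Z. rewrite plus_IZR, minus_IZR.
  now replace (a' - b' - (IZR k - IZR i + IZR j)) with (a - b - IZR k)
    by (rewrite <- Hi, <- Hj; ring).
Qed.

Lemma not_near1_half e y : e <= /4 -> Rabs y = /2 -> ~ near1 e y 0.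
Proof.
  intros He Hy [j Hj]. rewrite Rminus_0_r in Hj.
  destruct (Rlt_or_le (Rabs (IZR j)) 1) as [Hj'|Hj'].
  - apply int_abs_lt1 in Hj'. subst. simpl in Hj. rewrite Rminus_0_r in Hj. lra.
  - split_Rabs; lra.
Qed.

(* The representative of x modulo 1 lying in [-1/2, 1/2). *)
Definition centered (x : R) : R := x - IZR (up (x - / 2)).

Lemma centered_spec x k : Rabs (x - IZR k) < / 2 -> centered x = x - IZR k.
Proof.
  intro Hk. unfold centered. f_equal. f_equal. symmetry. apply tech_up; split_Rabs; lra.
Qed.

Lemma centered_0 : centered 0 = 0.
Proof. rewrite (centered_spec 0 0); simpl; [ring|]. rewrite Rminus_0_r, Rabs_R0. lra. Qed.

(* Near 0 in ℝ/ℤ, [centered] is a section of ℝ → ℝ/ℤ which is an isometry. *)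
Lemma centered_close e x y : near1 (/4) x 0 -> near1 (/4) y 0 -> near1 e y x -> e <= /4 ->
  Rabs (centered y - centered x) < e.
Proof.
  intros [i Hi] [j Hj] [k Hk] He. rewrite Rminus_0_r in Hi, Hj.
  rewrite (centered_spec x i), (centered_spec y j) by lra.
  assert (Hz : (k + i - j)%Z = 0%Z).
  { apply int_abs_lt1. rewrite minus_IZR, plus_IZR.
    replace (IZR k + IZR i - IZR j) with ((y - IZR j) - (x - IZR i) - (y - x - IZR k)) by ring.
    split_Rabs; lra. }
  assert (Hk' : IZR k = IZR j - IZR i).
  { assert (Hz' : IZR (k + i - j) = 0) by (rewrite Hz; reflexivity).
    rewrite minus_IZR, plus_IZR in Hz'. lra. }
  now replace (y - IZR j - (x - IZR i)) with (y - x - IZR k) by lra.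
Qed.

(** * Real functions on the unit interval *)

Definition inI (t : R) : Prop := 0 <= t <= 1.

Definition cont_on (a b : R) (f : R -> R) : Prop :=
  forall t, a <= t <= b -> forall e, 0 < e -> exists r, 0 < r /\
    forall t', a <= t' <= b -> Rabs (t' - t) < r -> Rabs (f t' - f t) < e.

Definition contI (f : R -> R) : Prop := cont_on 0 1 f.

(* continuity of [0,1] → ℝ → ℝ/ℤ *)
Definition cont_mod1 (f : R -> R) : Prop :=
  forall t, inI t -> forall e, 0 < e -> exists r, 0 < r /\
    forall t', inI t' -> Rabs (t' - t) < r -> near1 e (f t') (f t).

Lemma contI_minus f g : contI f -> contI g -> contI (fun s => f s - g s).
Proof.
  intros Hf Hg t Ht e He.
  destruct (Hf t Ht (e/2)) as [r1 [Hr1 H1]]; [lra|].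
  destruct (Hg t Ht (e/2)) as [r2 [Hr2 H2]]; [lra|].
  exists (Rmin r1 r2). split; [apply Rmin_glb_lt; auto|].
  intros t' Ht' Htt. pose proof (Rmin_l r1 r2). pose proof (Rmin_r r1 r2).
  assert (Rabs (f t' - f t) < e/2) by (apply H1; auto; lra).
  assert (Rabs (g t' - g t) < e/2) by (apply H2; auto; lra).
  replace (f t' - g t' - (f t - g t)) with ((f t' - f t) - (g t' - g t)) by ring.
  split_Rabs; lra.
Qed.

Lemma cont_on_glue a b c (P L : R -> R) : a <= b -> b <= c ->
  cont_on a b P -> cont_on b c L -> P b = L b ->
  cont_on a c (fun t => if Rle_dec b t then L t else P t).
Proof.
  intros Hab Hbc HP HL Hb t Ht e He.
  destruct (Rtotal_order t b) as [Hlt|[-> |Hgt]].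
  - destruct (HP t (conj (proj1 Ht) (Rlt_le _ _ Hlt)) e He) as [r [Hr Hr']].
    exists (Rmin r (b - t)). split; [apply Rmin_glb_lt; lra|].
    intros t' Ht' Htt. pose proof (Rmin_l r (b - t)). pose proof (Rmin_r r (b - t)).
    destruct (Rle_dec b t'); [split_Rabs; lra|]. destruct (Rle_dec b t); [lra|].
    apply Hr'; lra.
  - destruct (HP b (conj Hab (Rle_refl b)) e He) as [r1 [Hr1 H1]].
    destruct (HL b (conj (Rle_refl b) Hbc) e He) as [r2 [Hr2 H2]].
    exists (Rmin r1 r2). split; [apply Rmin_glb_lt; lra|].
    intros t' Ht' Htt. pose proof (Rmin_l r1 r2). pose proof (Rmin_r r1 r2).
    destruct (Rle_dec b b) as [_|]; [|lra].
    destruct (Rle_dec b t'); [apply H2; lra|]. rewrite <- Hb. apply H1; lra.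
  - destruct (HL t (conj (Rlt_le _ _ Hgt) (proj2 Ht)) e He) as [r [Hr Hr']].
    exists (Rmin r (t - b)). split; [apply Rmin_glb_lt; lra|].
    intros t' Ht' Htt. pose proof (Rmin_l r (t - b)). pose proof (Rmin_r r (t - b)).
    destruct (Rle_dec b t'); [|split_Rabs; lra]. destruct (Rle_dec b t); [|lra].
    apply Hr'; lra.
Qed.

Definition clamp (s : R) : R := Rmax 0 (Rmin s 1).

Lemma clamp_in s : inI (clamp s).
Proof. unfold clamp, inI, Rmax, Rmin. repeat destruct Rle_dec; lra. Qed.

Lemma clamp_id s : inI s -> clamp s = s.
Proof. unfold clamp, inI, Rmax, Rmin. intro. repeat destruct Rle_dec; lra. Qed.

Lemma clamp_lip s s' : Rabs (clamp s - clamp s') <= Rabs (s - s').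
Proof. unfold clamp, Rmax, Rmin. repeat destruct Rle_dec; split_Rabs; lra. Qed.

Lemma contI_continuity f : contI f -> continuity (fun s => f (clamp s)).
Proof.
  intros Hf s. unfold continuity_pt, continue_in, limit1_in, limit_in. simpl.
  intros e He. destruct (Hf (clamp s) (clamp_in s) e He) as [r [Hr Hr']].
  exists r; split; auto. intros x [_ Hx]. unfold R_dist in *.
  apply Hr'; [apply clamp_in|]. eapply Rle_lt_trans; [apply clamp_lip|auto].
Qed.

Lemma ivt_up f y : contI f -> f 0 < y -> y < f 1 -> exists t, inI t /\ f t = y.
Proof.
  intros Hc H0 H1.
  destruct (IVT (fun s => f (clamp s) - y) 0 1) as [z [Hz Hz']].
  - apply continuity_minus; [now apply contI_continuity|apply continuity_const; now intros ? ?].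
  - lra.
  - rewrite clamp_id by (unfold inI; lra). lra.
  - rewrite clamp_id by (unfold inI; lra). lra.
  - exists z. split; [exact Hz|]. rewrite clamp_id in Hz' by exact Hz. lra.
Qed.

Lemma ivt_down f y : contI f -> f 1 < y -> y < f 0 -> exists t, inI t /\ f t = y.
Proof.
  intros Hc H0 H1.
  destruct (ivt_up (fun s => - f s) (- y)) as [t [Ht Ht']]; try lra.
  - intros t Ht e He. destruct (Hc t Ht e He) as [r [Hr Hr']]. exists r; split; auto.
    intros. replace (- f t' - - f t) with (- (f t' - f t)) by ring. rewrite Rabs_Ropp. auto.
  - exists t. split; auto. lra.
Qed.

(* Between two distinct integers there is a non-integer value. *)
Lemma int_const f : contI f -> (forall t, inI t -> exists k, f t = IZR k) -> f 0 = f 1.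
Proof.
  intros Hc Hint.
  destruct (Hint 0 ltac:(unfold inI; lra)) as [k0 H0].
  destruct (Hint 1 ltac:(unfold inI; lra)) as [k1 H1].
  destruct (Rtotal_order (f 0) (f 1)) as [Hlt|[Heq|Hgt]]; auto; exfalso.
  - rewrite H0, H1 in Hlt. apply lt_IZR in Hlt.
    assert (Hle : IZR (k0 + 1) <= IZR k1) by (apply IZR_le; lia). rewrite plus_IZR in Hle.
    destruct (ivt_up f (IZR k0 + /2) Hc) as [t [Ht Hft]]; try lra.
    destruct (Hint t Ht) as [k Hk]. rewrite Hk in Hft.
    assert (IZR k0 < IZR k) as Ha by lra.
    assert (IZR k < IZR (k0 + 1)) as Hb by (rewrite plus_IZR; lra).
    apply lt_IZR in Ha. apply lt_IZR in Hb. lia.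
  - rewrite H0, H1 in Hgt. apply lt_IZR in Hgt.
    assert (Hle : IZR (k1 + 1) <= IZR k0) by (apply IZR_le; lia). rewrite plus_IZR in Hle.
    destruct (ivt_down f (IZR k1 + /2) Hc) as [t [Ht Hft]]; try lra.
    destruct (Hint t Ht) as [k Hk]. rewrite Hk in Hft.
    assert (IZR k1 < IZR k) as Ha by lra.
    assert (IZR k < IZR (k1 + 1)) as Hb by (rewrite plus_IZR; lra).
    apply lt_IZR in Ha. apply lt_IZR in Hb. lia.
Qed.

(* A continuous D staying e-close to ℤ and ending at 0 stays e-close to 0:
   leaving the e-neighbourhood of 0 would force it through a half-integer. *)
Lemma stays_near_zero D e : contI D -> 0 < e -> e <= /4 ->
  (forall t, inI t -> near1 e (D t) 0) -> D 1 = 0 -> Rabs (D 0) < e.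
Proof.
  intros Hc He He4 Hnear H1.
  destruct (Hnear 0 ltac:(unfold inI; lra)) as [k Hk]. rewrite Rminus_0_r in Hk.
  destruct (Z.eq_dec k 0) as [->|Hn].
  - simpl in Hk. now rewrite Rminus_0_r in Hk.
  - exfalso. destruct (Z.ltb_spec k 0) as [Hl|Hl].
    + assert (Hk1 : IZR k <= IZR (-1)) by (apply IZR_le; lia). simpl in Hk1.
      destruct (ivt_up D (- / 2) Hc) as [t [Ht Hft]]; try (split_Rabs; lra).
      apply (not_near1_half e (D t) He4); [rewrite Hft; split_Rabs; lra|auto].
    + assert (Hk1 : IZR 1 <= IZR k) by (apply IZR_le; lia). simpl in Hk1.
      destruct (ivt_down D (/ 2) Hc) as [t [Ht Hft]]; try (split_Rabs; lra).
      apply (not_near1_half e (D t) He4); [rewrite Hft; split_Rabs; lra|auto].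
Qed.

Lemma list_min (f : R -> R) (l : list R) :
  (forall t, In t l -> 0 < f t) -> exists m, 0 < m /\ forall t, In t l -> m <= f t.
Proof.
  induction l as [|t l IH]; intro Hpos.
  - exists 1. split; [lra|intros t []].
  - destruct IH as [m [Hm Hm']]; [intros u Hu; apply Hpos; right; exact Hu|].
    exists (Rmin m (f t)). split; [apply Rmin_glb_lt; auto; apply Hpos; left; auto|].
    intros u [<-|Hu]; [apply Rmin_r|]. eapply Rle_trans; [apply Rmin_l|auto].
Qed.

(* Compactness of [0,1] in Lebesgue-number form: if every t admits a radius r
   with P t r, then some m > 0 works uniformly, via a finite subcover. *)
Lemma uniform_radius (P : R -> R -> Prop) :
  (forall t, inI t -> exists r, 0 < r /\ P t r) ->
  exists m, 0 < m /\ forall s, inI s ->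
    exists t r, inI t /\ P t r /\ m <= r /\ Rabs (s - t) < r / 2.
Proof.
  intros HP.
  set (rho := fun t => match excluded_middle_informative (inI t) with
                       | left Ht => proj1_sig (constructive_indefinite_description _ (HP t Ht))
                       | right _ => 1 end).
  assert (Hrho : forall t, inI t -> 0 < rho t /\ P t (rho t)).
  { intros t Ht. unfold rho. destruct excluded_middle_informative as [H|H]; [|contradiction].
    apply (proj2_sig (constructive_indefinite_description _ (HP t H))). }
  assert (Hdom : forall x, (exists y, (fun t s => inI t /\ Rabs (s - t) < rho t / 2) x y) -> inI x).
  { intros x [y [Hy _]]. exact Hy. }
  set (fam := mkfamily inI (fun t s => inI t /\ Rabs (s - t) < rho t / 2) Hdom).
  destruct (compact_P3 0 1 fam) as [D [Hcov [l Hl]]].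
  - split.
    + intros s Hs. exists s. simpl. split; auto. rewrite Rminus_diag, Rabs_R0.
      destruct (Hrho s Hs). lra.
    + intros t s [Ht Hs]. destruct (Hrho t Ht) as [Hr _].
      assert (Hd : 0 < rho t / 2 - Rabs (s - t)) by lra.
      exists (mkposreal _ Hd). intros y Hy. unfold disc in Hy. simpl in Hy. split; auto.
      split_Rabs; lra.
  - destruct (list_min rho l) as [m [Hm Hm']].
    { intros t Ht. apply Hl in Ht. apply Hrho, Ht. }
    exists m. split; [exact Hm|]. intros s Hs.
    destruct (Hcov s Hs) as [t [[Ht Hst] HDt]].
    exists t, (rho t). split; [exact Ht|]. split; [apply Hrho, Ht|].
    split; [apply Hm', Hl; split; auto|exact Hst].
Qed.

(** * Path lifting for ℝ → ℝ/ℤ *)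

Lemma unif_cont_mod1 f e : cont_mod1 f -> 0 < e -> exists d, 0 < d /\
  forall s s', inI s -> inI s' -> Rabs (s - s') < d -> near1 (e + e) (f s) (f s').
Proof.
  intros Hf He.
  destruct (uniform_radius (fun t r => forall t', inI t' -> Rabs (t' - t) < r ->
                                         near1 e (f t') (f t))) as [m [Hm Hunif]].
  { intros t Ht. apply Hf; auto. }
  exists (m / 2). split; [lra|]. intros s s' Hs Hs' Hss.
  destruct (Hunif s Hs) as [t [r [Ht [Hr [Hmr Hst]]]]].
  apply near1_trans with (f t); [apply Hr; auto; lra|].
  apply near1_sym, Hr; auto. split_Rabs; lra.
Qed.

Definition is_lift (k : R -> R) (c : R) (L : R -> R) : Prop :=
  contI L /\ (forall t, inI t -> cong1 (L t) (k t)) /\ L 1 = c.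

Lemma centered_lift_cont k a b : cont_mod1 k -> 0 <= a -> b <= 1 ->
  (forall t, a <= t <= b -> near1 (/4) (k t - k b) 0) ->
  cont_on a b (fun t => centered (k t - k b)).
Proof.
  intros Hk Ha Hb Hnear t Ht e He.
  destruct (Hk t ltac:(unfold inI; lra) (Rmin e (/4))) as [r [Hr Hr']].
  { apply Rmin_glb_lt; lra. }
  exists r. split; [exact Hr|]. intros t' Ht' Htt.
  eapply Rlt_le_trans; [|apply (Rmin_l e (/4))].
  apply centered_close; [apply Hnear; lra|apply Hnear; lra| |apply Rmin_r].
  apply near1_shift, Hr'; [unfold inI; lra|exact Htt].
Qed.

Lemma lift_extend_left k c a b L : cont_mod1 k -> 0 <= a <= b -> b <= 1 ->
  (forall t, a <= t <= b -> near1 (/4) (k t - k b) 0) ->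
  cont_on b 1 L -> (forall t, b <= t <= 1 -> cong1 (L t) (k t)) -> L 1 = c ->
  exists L', cont_on a 1 L' /\ (forall t, a <= t <= 1 -> cong1 (L' t) (k t)) /\ L' 1 = c.
Proof.
  intros Hk Hab Hb1 Hnear HLc HLk HL1.
  set (P := fun t => L b + centered (k t - k b)).
  assert (HP : cont_on a b P).
  { intros t Ht e He.
    destruct (centered_lift_cont k a b Hk (proj1 Hab) Hb1 Hnear t Ht e He) as [r [Hr Hr']].
    exists r. split; [exact Hr|]. intros t' Ht' Htt. unfold P.
    replace (L b + centered (k t' - k b) - (L b + centered (k t - k b)))
      with (centered (k t' - k b) - centered (k t - k b)) by ring.
    now apply Hr'. }
  exists (fun t => if Rle_dec b t then L t else P t). split; [|split].
  - apply cont_on_glue; auto; [lra|]. unfold P. rewrite Rminus_diag, centered_0. ring.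
  - intros t Ht. destruct (Rle_dec b t) as [Hbt|Hbt]; [apply HLk; lra|].
    destruct (Hnear t) as [j Hj]; [lra|]. rewrite Rminus_0_r in Hj.
    destruct (HLk b) as [i Hi]; [lra|].
    unfold P. rewrite (centered_spec _ j) by lra.
    exists (i - j)%Z. rewrite minus_IZR. lra.
  - destruct (Rle_dec b 1); [exact HL1|lra].
Qed.

Lemma lift_exists k c : cont_mod1 k -> cong1 c (k 1) -> exists L, is_lift k c L.
Proof.
  intros Hk Hc.
  destruct (unif_cont_mod1 k (/8) Hk) as [d [Hd Hdk]]; [lra|].
  replace (/8 + /8) with (/4) in Hdk by field.
  set (st := d / 2). assert (Hst : 0 < st) by (unfold st; lra).
  assert (Hsteps : forall n : nat, exists L, cont_on (Rmax 0 (1 - INR n * st)) 1 L /\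
     (forall t, Rmax 0 (1 - INR n * st) <= t <= 1 -> cong1 (L t) (k t)) /\ L 1 = c).
  { induction n as [|n [L [HLc [HLk HL1]]]].
    - replace (Rmax 0 (1 - INR 0 * st)) with 1
        by (simpl; rewrite Rmult_0_l, Rminus_0_r; symmetry; apply Rmax_right; lra).
      exists (fun _ => c). split; [|split; [|reflexivity]].
      + intros t _ e He. exists 1. split; [lra|]. intros. rewrite Rminus_diag, Rabs_R0. exact He.
      + intros t Ht. replace t with 1 by lra. exact Hc.
    - set (b := Rmax 0 (1 - INR n * st)) in *.
      set (a := Rmax 0 (1 - INR (S n) * st)).
      assert (Hab : 0 <= a <= b /\ b - a <= st /\ b <= 1).
      { unfold a, b. rewrite S_INR. pose proof (pos_INR n).
        unfold Rmax. repeat destruct Rle_dec; nra. }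
      apply (lift_extend_left k c a b L Hk); try tauto.
      intros t Ht.
      assert (Hkt : near1 (/4) (k t) (k b))
        by (apply Hdk; [unfold inI; lra|unfold inI; lra|unfold st in *; split_Rabs; lra]).
      apply (near1_shift _ _ _ (k b)) in Hkt. rewrite Rminus_diag in Hkt. exact Hkt. }
  destruct (archimed (/ st)) as [Hup _].
  destruct (Hsteps (Z.to_nat (up (/ st)))) as [L [HLc [HLk HL1]]].
  replace (Rmax 0 (1 - INR (Z.to_nat (up (/ st))) * st)) with 0 in HLc, HLk.
  - exists L. split; [exact HLc|split; auto].
  - symmetry. apply Rmax_left. rewrite INR_IZR_INZ, Znat.Z2Nat.id.
    + assert (1 <= IZR (up (/ st)) * st); [|lra].
      replace 1 with (/ st * st) by (field; lra). apply Rmult_le_compat_r; lra.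
    + apply le_IZR. pose proof (Rinv_0_lt_compat st Hst). lra.
Qed.

Lemma ui_eq (a b : unit_interval) : proj1_sig a = proj1_sig b -> a = b.
Proof.
  destruct a as [a Ha], b as [b Hb]. simpl. intros ->. f_equal. apply proof_irrelevance.
Qed.

Definition clampI (s : R) : unit_interval := exist _ (clamp s) (clamp_in s).

Lemma clampI_val s : inI s -> proj1_sig (clampI s) = s.
Proof. intro Hs. simpl. now apply clamp_id. Qed.

Lemma clampI0 : clampI 0 = I0.
Proof. apply ui_eq. simpl. apply clamp_id. unfold inI; lra. Qed.

Lemma clampI1 : clampI 1 = I1.
Proof. apply ui_eq. simpl. apply clamp_id. unfold inI; lra. Qed.

Lemma ball_I_open (c rho : R) : I_open (fun r : unit_interval => Rabs (proj1_sig r - c) < rho).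
Proof.
  exists (fun y => Rabs (y - c) < rho). split; [|intro; tauto].
  intros x Hx. exists (rho - Rabs (x - c)). split; [lra|]. intros y Hy. split_Rabs; lra.
Qed.

Lemma I_open_ball (V : unit_interval -> Prop) r : I_open V -> V r ->
  exists rho, 0 < rho /\ forall r', Rabs (proj1_sig r' - proj1_sig r) < rho -> V r'.
Proof.
  intros [U [HU HUV]] Hr. apply HUV in Hr. destruct (HU _ Hr) as [e [He He']].
  exists e. split; auto. intros r' Hr'. apply HUV, He', Hr'.
Qed.

Section Contractible.
Variables (X : Type) (OX : Opens X) (x0 : X) (H : X * unit_interval -> X).
Hypothesis HH : continuous (prod_open OX I_open) OX H.
Hypothesis Hends : forall x, H (x, I0) = x /\ H (x, I1) = x0.

Lemma contraction_nbhd (P : X -> Prop) z t : OX P -> inI t -> P (H (z, clampI t)) ->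
  exists U rho, OX U /\ U z /\ 0 < rho /\
    forall z' t', U z' -> inI t' -> Rabs (t' - t) < rho -> P (H (z', clampI t')).
Proof.
  intros HP Ht Hz.
  destruct (HH P HP (z, clampI t) Hz) as [U [V [HU [HV [HUz [HVt Hall]]]]]].
  simpl in *. destruct (I_open_ball V _ HV HVt) as [rho [Hrho Hb]].
  exists U, rho. repeat split; auto. intros z' t' Hz' Ht' Htt. apply Hall; auto.
  apply Hb. rewrite !clampI_val; auto.
Qed.

(* Contractible spaces are connected: a clopen set contains all points or none,
   since its indicator along the path from z to x0 is continuous and integral. *)
Lemma contractible_clopen (S : X -> Prop) :
  OX S -> OX (fun z => ~ S z) -> forall z, S z <-> S x0.
Proof.
  intros HS HnS z.
  set (ind := fun s => if excluded_middle_informative (S (H (z, clampI s))) then 1 else 0).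
  assert (Hlocal : forall t, inI t -> exists rho, 0 < rho /\
                     forall t', inI t' -> Rabs (t' - t) < rho -> ind t' = ind t).
  { intros t Ht. unfold ind at 2.
    destruct (excluded_middle_informative (S (H (z, clampI t)))) as [Hs|Hs].
    - destruct (contraction_nbhd S z t HS Ht Hs) as [U [rho [_ [HUz [Hrho Hb]]]]].
      exists rho. split; auto. intros t' Ht' Htt. unfold ind.
      destruct excluded_middle_informative as [_|Hn]; [reflexivity|].
      exfalso. apply Hn, (Hb z t'); auto.
    - destruct (contraction_nbhd _ z t HnS Ht Hs) as [U [rho [_ [HUz [Hrho Hb]]]]].
      exists rho. split; auto. intros t' Ht' Htt. unfold ind.
      destruct excluded_middle_informative as [Hy|_]; [|reflexivity].
      exfalso. apply (Hb z t'); auto. }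
  assert (Hc : contI ind).
  { intros t Ht e He. destruct (Hlocal t Ht) as [rho [Hrho Hb]].
    exists rho. split; auto. intros t' Ht' Htt. rewrite Hb by auto.
    rewrite Rminus_diag, Rabs_R0. exact He. }
  assert (Hind01 : ind 0 = ind 1).
  { apply int_const; [exact Hc|]. intros t _. unfold ind.
    destruct excluded_middle_informative; [exists 1%Z|exists 0%Z]; reflexivity. }
  unfold ind in Hind01. rewrite clampI0, clampI1, (proj1 (Hends z)), (proj2 (Hends z)) in Hind01.
  destruct (excluded_middle_informative (S z)), (excluded_middle_informative (S x0));
    try tauto; lra.
Qed.

End Contractible.

(* A directed edge (a, b) is a traversed forwards if b = true, backwards otherwise. *)
Definition dsrc {V0 E : Type} (d0 d1 : E -> V0) (d : E * bool) : V0 :=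
  if snd d then d0 (fst d) else d1 (fst d).
Definition dtgt {V0 E : Type} (d0 d1 : E -> V0) (d : E * bool) : V0 :=
  if snd d then d1 (fst d) else d0 (fst d).

Fixpoint walk {V0 E : Type} (T : E -> Prop) (d0 d1 : E -> V0) (x y : V0)
    (l : list (E * bool)) : Prop :=
  match l with
  | nil => x = y
  | d :: l' => T (fst d) /\ dsrc d0 d1 d = x /\ walk T d0 d1 (dtgt d0 d1 d) y l'
  end.

Lemma walk_app {V0 E : Type} (T : E -> Prop) (d0 d1 : E -> V0) x y z l1 l2 :
  walk T d0 d1 x y l1 -> walk T d0 d1 y z l2 -> walk T d0 d1 x z (l1 ++ l2).
Proof.
  revert x. induction l1 as [|d l IH]; simpl; intros x H1 H2.
  - now subst.
  - destruct H1 as [? [? ?]]. split; auto.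
Qed.

Lemma walk_split {V0 E : Type} (T : E -> Prop) (d0 d1 : E -> V0) x z m d r :
  walk T d0 d1 x z (m ++ d :: r) ->
  walk T d0 d1 x (dsrc d0 d1 d) m /\ walk T d0 d1 (dsrc d0 d1 d) z (d :: r).
Proof.
  revert x. induction m as [|d' m IH]; simpl; intros x Hw.
  - destruct Hw as [H1 [H2 H3]]. subst. auto.
  - destruct Hw as [H1 [H2 H3]]. destruct (IH _ H3). split; auto.
Qed.

(** * Maximal trees: connectivity and potentials *)

Section Tree.
Variables (V0 E : Type) (OE : Opens E) (d0 d1 : E -> V0) (T : E -> Prop).
Hypothesis Hdisc : forall W, sub_open OE T W.
Let ET := {a : E | T a}.
Variables (QT : Type) (OT : Opens QT) (qT : V0 + (ET * unit_interval) -> QT).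
Hypothesis Hreal : is_realization (sub_open OE T) (fun a => d0 (proj1_sig a))
                   (fun a => d1 (proj1_sig a)) OT qT.
Variables (x0 : QT) (H : QT * unit_interval -> QT).
Hypothesis HH : continuous (prod_open OT I_open) OT H.
Hypothesis Hends : forall x, H (x, I0) = x /\ H (x, I1) = x0.

Lemma q_edge_start (a : ET) r : proj1_sig r = 0 -> qT (inr (a, r)) = qT (inl (d0 (proj1_sig a))).
Proof.
  intro Hr. apply (proj2 Hreal). right. exists (d0 (proj1_sig a)). split; [|left; auto].
  right. exists a, r. split; auto.
Qed.

Lemma q_edge_end (a : ET) r : proj1_sig r = 1 -> qT (inr (a, r)) = qT (inl (d1 (proj1_sig a))).
Proof.
  intro Hr. apply (proj2 Hreal). right. exists (d1 (proj1_sig a)). split; [|left; auto].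
  right. exists a, r. split; auto.
Qed.

Lemma identified_point_is_end (p : V0 + (ET * unit_interval)) a r x : p = inr (a, r) ->
  real_vertex (fun a => d0 (proj1_sig a)) (fun a => d1 (proj1_sig a)) p x ->
  proj1_sig r = 0 \/ proj1_sig r = 1.
Proof.
  intros -> [Hp|[b [s [Hp [[Hs _]|[Hs _]]]]]]; [discriminate| |];
  injection Hp; intros; subst; auto.
Qed.

(* Since the edges are discrete, openness in |T| is openness along each edge. *)
Lemma open_of_edges (V : QT -> Prop) :
  (forall a r, V (qT (inr (a, r))) -> exists rho, 0 < rho /\
     forall r', Rabs (proj1_sig r' - proj1_sig r) < rho -> V (qT (inr (a, r')))) -> OT V.
Proof.
  intro HV. apply (proj2 (proj1 Hreal)). split; [exact I|].
  intros [a r] Hp. simpl in Hp. destruct (HV a r Hp) as [rho [Hrho Hb]].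
  exists (fun b => b = a), (fun r' => Rabs (proj1_sig r' - proj1_sig r) < rho).
  split; [apply Hdisc|]. split; [apply ball_I_open|]. simpl. split; auto.
  split; [rewrite Rminus_diag, Rabs_R0; auto|]. intros b r' -> Hr'. apply Hb, Hr'.
Qed.

Lemma edge_nbhd (V : QT -> Prop) a r : OT V -> V (qT (inr (a, r))) -> exists rho, 0 < rho /\
     forall r', Rabs (proj1_sig r' - proj1_sig r) < rho -> V (qT (inr (a, r'))).
Proof.
  intros HV Hp. apply (proj2 (proj1 Hreal) V) in HV. destruct HV as [_ HV].
  destruct (HV (a, r) Hp) as [U [W [_ [HW [HUa [HWr Hall]]]]]].
  simpl in *. destruct (I_open_ball W r HW HWr) as [rho [Hrho Hb]].
  exists rho. split; [exact Hrho|]. intros r' Hr'. apply (Hall a r' HUa), Hb, Hr'.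
Qed.

(* Every vertex is reached from v by a walk in T: the set of points of |T|
   lying on edges reached from v is clopen. *)
Lemma tree_walk_exists (v : V0) : forall x, exists l, walk T d0 d1 v x l.
Proof.
  set (reach := fun y => exists l, walk T d0 d1 v y l).
  assert (Hedge : forall a : ET, reach (d0 (proj1_sig a)) <-> reach (d1 (proj1_sig a))).
  { intros [a Ha]. simpl. split; intros [l Hl].
    - exists (l ++ (a, true) :: nil). eapply walk_app; eauto. simpl. auto.
    - exists (l ++ (a, false) :: nil). eapply walk_app; eauto. simpl. auto. }
  set (good := fun p : V0 + (ET * unit_interval) =>
         match p with inl y => reach y | inr (a, _) => reach (d0 (proj1_sig a)) end).
  assert (Hgood_vertex : forall p x,
            real_vertex (fun a => d0 (proj1_sig a)) (fun a => d1 (proj1_sig a)) p x ->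
            (good p <-> reach x)).
  { intros p x [->|[a [r [-> [[_ Hd]|[_ Hd]]]]]]; simpl; subst; [tauto|tauto|apply Hedge]. }
  set (S := fun z => exists p, qT p = z /\ good p).
  assert (HS : forall p, S (qT p) <-> good p).
  { intros p. split; [|intro; exists p; auto].
    intros [p' [Hq Hg]]. apply (proj2 Hreal) in Hq. destruct Hq as [<-|[x [H1 H2]]]; auto.
    apply (Hgood_vertex p x H2), (Hgood_vertex p' x H1), Hg. }
  assert (Hedge_const : forall V : QT -> Prop,
            (forall a r r', V (qT (inr (a, r))) -> V (qT (inr (a, r')))) -> OT V).
  { intros V HV. apply open_of_edges. intros a r Ha. exists 1. split; [lra|].
    intros r' _. exact (HV a r r' Ha). }
  assert (Hclopen : forall z, S z <-> S x0).
  { apply (contractible_clopen QT OT x0 H HH Hends); apply Hedge_const; intros a r r';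
      rewrite !HS; simpl; tauto. }
  intro x. apply (HS (inl x)), Hclopen, (Hclopen (qT (inl v))), HS. exists nil. reflexivity.
Qed.

(* For a tree edge e, the map |T| → ℝ/ℤ winding once along e and constant 0
   off e lifts, along the contraction, to a real potential on the vertices. *)
Section Potential.
Variables (e : E) (He : T e).
Let eh : ET := exist _ e He.

(* a representative in ℝ of the winding map |T| → ℝ/ℤ *)
Definition winding (z : QT) : R :=
  match excluded_middle_informative (exists r : unit_interval, qT (inr (eh, r)) = z) with
  | left P => proj1_sig (proj1_sig (constructive_indefinite_description _ P))
  | right _ => 0 end.

Lemma winding_on_e r : cong1 (winding (qT (inr (eh, r)))) (proj1_sig r).
Proof.
  unfold winding. destruct excluded_middle_informative as [P|P].
  - destruct (constructive_indefinite_description _ P) as [r' Hr']. simpl.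
    apply (proj2 Hreal) in Hr'. destruct Hr' as [Hr'|[x [H1 H2]]].
    + injection Hr'. intros ->. apply cong1_refl.
    + apply cong1_01; eapply identified_point_is_end; eauto.
  - exfalso. apply P. exists r. reflexivity.
Qed.

Lemma winding_off_e (a : ET) r : a <> eh -> cong1 (winding (qT (inr (a, r)))) 0.
Proof.
  intro Ha. unfold winding. destruct excluded_middle_informative as [P|P].
  - destruct (constructive_indefinite_description _ P) as [r' Hr']. simpl.
    apply (proj2 Hreal) in Hr'. destruct Hr' as [Hr'|[x [H1 H2]]].
    + injection Hr'. intros _ ->. contradiction.
    + apply cong1_01; [eapply identified_point_is_end; eauto|auto].
  - apply cong1_refl.
Qed.

Lemma winding_cont z eps : 0 < eps -> OT (fun z' => near1 eps (winding z') (winding z)).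
Proof.
  intro Heps. apply open_of_edges. intros a r Har.
  destruct (classic (a = eh)) as [->|Hne].
  - apply (near1_cong _ _ (proj1_sig r) _ (winding z)) in Har;
      [|apply winding_on_e|apply cong1_refl].
    destruct Har as [k Hk].
    exists (eps - Rabs (proj1_sig r - winding z - IZR k)). split; [lra|].
    intros r' Hr'. apply (near1_cong _ (proj1_sig r') _ (winding z));
      [apply cong1_sym, winding_on_e|apply cong1_refl|].
    exists k. split_Rabs; lra.
  - exists 1. split; [lra|]. intros r' _. eapply near1_cong; [| |exact Har].
    + apply (cong1_trans _ 0); [apply winding_off_e; auto|apply cong1_sym, winding_off_e; auto].
    + apply cong1_refl.
Qed.

Definition winding_along (z : QT) (s : R) : R := winding (H (z, clampI s)).

Lemma winding_along_cont z : cont_mod1 (winding_along z).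
Proof.
  intros t Ht eps Heps.
  destruct (contraction_nbhd QT OT H HH _ z t (winding_cont _ _ Heps) Ht
     (near1_refl _ _ Heps)) as [U [rho [_ [HUz [Hrho Hb]]]]].
  exists rho. split; auto. intros t' Ht' Htt. apply (Hb z t'); auto.
Qed.

Lemma winding_along_1 z : winding_along z 1 = winding x0.
Proof. unfold winding_along. now rewrite clampI1, (proj2 (Hends z)). Qed.

Lemma winding_along_0 z : winding_along z 0 = winding z.
Proof. unfold winding_along. now rewrite clampI0, (proj1 (Hends z)). Qed.

Definition chosen_lift (k : R -> R) : R -> R :=
  match excluded_middle_informative (exists L, is_lift k (winding x0) L) with
  | left P => proj1_sig (constructive_indefinite_description _ P)
  | right _ => fun _ => 0 end.

Lemma chosen_lift_spec z : is_lift (winding_along z) (winding x0) (chosen_lift (winding_along z)).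
Proof.
  unfold chosen_lift. destruct excluded_middle_informative as [P|P].
  - apply (proj2_sig (constructive_indefinite_description _ P)).
  - exfalso. apply P, lift_exists; [apply winding_along_cont|].
    rewrite winding_along_1. apply cong1_refl.
Qed.

Definition potential (x : V0) : R := chosen_lift (winding_along (qT (inl x))) 0.

Section AlongEdge.
Variable (a : ET).
Let zr (r : R) : QT := qT (inr (a, clampI r)).

Lemma winding_along_cont2 r t eps : inI r -> inI t -> 0 < eps -> exists rho, 0 < rho /\
  forall r' t', inI r' -> inI t' -> Rabs (r' - r) < rho -> Rabs (t' - t) < rho ->
    near1 eps (winding_along (zr r') t') (winding_along (zr r) t).
Proof.
  intros Hr Ht Heps.
  destruct (contraction_nbhd QT OT H HH _ (zr r) t (winding_cont _ _ Heps) Ht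
     (near1_refl _ _ Heps)) as [U [rho [HU [HUz [Hrho Hb]]]]].
  destruct (edge_nbhd U a (clampI r) HU HUz) as [rho1 [Hrho1 Hb1]].
  exists (Rmin rho rho1). split; [apply Rmin_glb_lt; auto|].
  intros r' t' Hr' Ht' Hrr Htt. pose proof (Rmin_l rho rho1). pose proof (Rmin_r rho rho1).
  apply Hb; [|auto|lra]. apply Hb1. rewrite !clampI_val by auto. lra.
Qed.

(* uniformity in s, by compactness of [0,1] *)
Lemma winding_along_tube r eps : inI r -> 0 < eps -> exists rho, 0 < rho /\
  forall r', inI r' -> Rabs (r' - r) < rho -> forall s, inI s ->
    near1 (eps + eps) (winding_along (zr r') s) (winding_along (zr r) s).
Proof.
  intros Hr Heps.
  destruct (uniform_radius (fun t rho => forall r' t', inI r' -> inI t' ->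
      Rabs (r' - r) < rho -> Rabs (t' - t) < rho ->
      near1 eps (winding_along (zr r') t') (winding_along (zr r) t))) as [m [Hm Hunif]].
  { intros t Ht. apply winding_along_cont2; auto. }
  exists (m / 2). split; [lra|]. intros r' Hr' Hrr s Hs.
  destruct (Hunif s Hs) as [t [rho [Ht [HP [Hmr Hst]]]]].
  apply near1_trans with (winding_along (zr r) t); [apply HP; auto; lra|].
  apply near1_sym, HP; auto; [rewrite Rminus_diag, Rabs_R0|]; lra.
Qed.

Definition potential_on_edge (r : R) : R := chosen_lift (winding_along (zr r)) 0.

(* Nearby lifts with the same endpoint stay close (by [stays_near_zero]). *)
Lemma potential_on_edge_cont : contI potential_on_edge.
Proof.
  intros r Hr eps Heps.
  set (eps' := Rmin eps (/4) / 2).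
  assert (Heps' : 0 < eps').
  { unfold eps'. assert (0 < Rmin eps (/4)) by (apply Rmin_glb_lt; lra). lra. }
  destruct (winding_along_tube r eps' Hr Heps') as [rho [Hrho Hb]].
  exists rho. split; auto. intros r' Hr' Hrr.
  destruct (chosen_lift_spec (zr r')) as [C1 [Z1 E1]].
  destruct (chosen_lift_spec (zr r)) as [C2 [Z2 E2]].
  pose proof (Rmin_l eps (/4)). pose proof (Rmin_r eps (/4)).
  set (D := fun s => chosen_lift (winding_along (zr r')) s - chosen_lift (winding_along (zr r)) s).
  assert (HD : Rabs (D 0) < eps' + eps').
  { apply stays_near_zero; [apply contI_minus; auto|lra|unfold eps'; lra| |].
    - intros s Hs. specialize (Hb r' Hr' Hrr s Hs).
      apply (near1_shift _ _ _ (winding_along (zr r) s)) in Hb. rewrite Rminus_diag in Hb.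
      eapply near1_cong; [| |exact Hb]; [|apply cong1_refl].
      destruct (Z1 s Hs) as [i Hi]. destruct (Z2 s Hs) as [j Hj].
      exists (j - i)%Z. unfold D. rewrite minus_IZR. lra.
    - unfold D. rewrite E1, E2. ring. }
  unfold D, potential_on_edge in *. unfold eps' in HD. lra.
Qed.

Lemma potential_on_edge_cong r : inI r -> cong1 (potential_on_edge r) (winding (zr r)).
Proof.
  intro Hr. destruct (chosen_lift_spec (zr r)) as [_ [Hk _]].
  unfold potential_on_edge. rewrite <- winding_along_0. apply Hk. unfold inI; lra.
Qed.

Lemma potential_on_edge_0 : potential_on_edge 0 = potential (d0 (proj1_sig a)).
Proof.
  unfold potential_on_edge, potential, zr. rewrite (q_edge_start a); [reflexivity|].
  apply clampI_val. unfold inI; lra.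
Qed.

Lemma potential_on_edge_1 : potential_on_edge 1 = potential (d1 (proj1_sig a)).
Proof.
  unfold potential_on_edge, potential, zr. rewrite (q_edge_end a); [reflexivity|].
  apply clampI_val. unfold inI; lra.
Qed.

(* Along e the potential differs from the parameter by a constant integer. *)
Lemma potential_jump : a = eh ->
  potential (d1 (proj1_sig a)) = potential (d0 (proj1_sig a)) + 1.
Proof.
  intro Ha. rewrite <- potential_on_edge_0, <- potential_on_edge_1.
  assert (Hconst : (fun r => potential_on_edge r - r) 0 = (fun r => potential_on_edge r - r) 1).
  { apply (int_const (fun r => potential_on_edge r - r)).
    - apply contI_minus; [apply potential_on_edge_cont|].
      intros t0 _ e' He'. exists e'. split; [exact He'|]. intros t1 _ Ht1. exact Ht1.
    - intros t Ht.
      assert (Hc : cong1 (potential_on_edge t) t).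
      { eapply cong1_trans; [apply potential_on_edge_cong, Ht|]. unfold zr. rewrite Ha.
        rewrite <- (clampI_val t Ht) at 2. apply winding_on_e. }
      exact Hc. }
  simpl in Hconst. lra.
Qed.

(* Along other edges the potential is integral, hence constant. *)
Lemma potential_flat : a <> eh ->
  potential (d1 (proj1_sig a)) = potential (d0 (proj1_sig a)).
Proof.
  intro Ha. rewrite <- potential_on_edge_0, <- potential_on_edge_1. symmetry.
  apply int_const; [apply potential_on_edge_cont|]. intros t Ht.
  destruct (cong1_trans _ _ _ (potential_on_edge_cong t Ht) (winding_off_e a _ Ha)) as [k Hk].
  exists k. lra.
Qed.
End AlongEdge.
End Potential.

End Tree.

Lemma maximal_tree_walks (V0 E : Type) (OE : Opens E) (d0 d1 : E -> V0) (T : E -> Prop) :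
  maximal_tree OE d0 d1 T -> forall v x, exists l, walk T d0 d1 v x l.
Proof.
  intros [Hdisc [QT [OT [qT [Hreal [x0 [H [HH Hends]]]]]]]] v.
  exact (tree_walk_exists V0 E OE d0 d1 T Hdisc QT OT qT Hreal x0 H HH Hends v).
Qed.

Lemma maximal_tree_potential (V0 E : Type) (OE : Opens E) (d0 d1 : E -> V0) (T : E -> Prop) :
  maximal_tree OE d0 d1 T -> forall e, T e -> exists h : V0 -> R, forall a, T a ->
    (a = e -> h (d1 a) = h (d0 a) + 1) /\ (a <> e -> h (d1 a) = h (d0 a)).
Proof.
  intros [Hdisc [QT [OT [qT [Hreal [x0 [H [HH Hends]]]]]]]] e He.
  exists (potential V0 E T QT qT x0 H e He). intros a Ha. split.
  - intros ->.
    exact (potential_jump V0 E OE d0 d1 T Hdisc QT OT qT Hreal x0 H HH Hends e He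
             (exist _ e Ha) (f_equal (exist _ e) (proof_irrelevance _ Ha He))).
  - intro Hne.
    refine (potential_flat V0 E OE d0 d1 T Hdisc QT OT qT Hreal x0 H HH Hends e He
              (exist _ a Ha) _).
    intro Heq. injection Heq. auto.
Qed.

(** * Walks in a groupoid *)

Section Groupoid.
Variables (V0 M : Type) (s t : M -> V0) (comp : M -> M -> M) (idm : V0 -> M) (inv : M -> M).
Hypothesis Hid : forall x, s (idm x) = x /\ t (idm x) = x.
Hypothesis Hcomp : forall f g, t f = s g -> s (comp f g) = s f /\ t (comp f g) = t g.
Hypothesis Hassoc : forall f g h, t f = s g -> t g = s h ->
  comp (comp f g) h = comp f (comp g h).
Hypothesis Hunit : forall f, comp (idm (s f)) f = f /\ comp f (idm (t f)) = f.
Hypothesis Hinv : forall f, s (inv f) = t f /\ t (inv f) = s f /\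
  comp f (inv f) = idm (s f) /\ comp (inv f) f = idm (t f).

Lemma comp_id_l m x : s m = x -> comp (idm x) m = m.
Proof. intros <-. apply Hunit. Qed.

Lemma comp_id_r m x : t m = x -> comp m (idm x) = m.
Proof. intros <-. apply Hunit. Qed.

Lemma inv_idm x : inv (idm x) = idm x.
Proof.
  destruct (Hinv (idm x)) as [I1 [I2 [I3 _]]]. destruct (Hid x) as [H1 H2].
  rewrite <- (comp_id_l (inv (idm x)) x) by congruence. rewrite I3. now rewrite H1.
Qed.

Lemma idempotent_is_id p x : s p = x -> t p = x -> comp p p = p -> p = idm x.
Proof.
  intros H1 H2 H3. destruct (Hinv p) as [I1 [I2 [_ I4]]].
  transitivity (comp (comp (inv p) p) p).
  - rewrite I4, H2, <- H1. symmetry. apply Hunit.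
  - rewrite Hassoc by congruence. rewrite H3, I4. congruence.
Qed.

Section Walks.
Variables (E : Type) (d0 d1 : E -> V0) (T : E -> Prop) (sigma : E -> M).
Hypothesis Hsig : forall a, s (sigma a) = d0 a /\ t (sigma a) = d1 a.

Definition edge_arrow (d : E * bool) : M :=
  if snd d then sigma (fst d) else inv (sigma (fst d)).

Lemma edge_arrow_st d : s (edge_arrow d) = dsrc d0 d1 d /\ t (edge_arrow d) = dtgt d0 d1 d.
Proof.
  destruct d as [a []]; unfold edge_arrow, dsrc, dtgt; simpl; [apply Hsig|].
  destruct (Hinv (sigma a)) as [H1 [H2 _]]. rewrite H1, H2. split; apply Hsig.
Qed.

Fixpoint walk_arrow (x : V0) (l : list (E * bool)) : M :=
  match l with
  | nil => idm x
  | d :: l' => comp (edge_arrow d) (walk_arrow (dtgt d0 d1 d) l')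
  end.

Lemma walk_arrow_st x y l : walk T d0 d1 x y l -> s (walk_arrow x l) = x /\ t (walk_arrow x l) = y.
Proof.
  revert x. induction l as [|d l IH]; simpl; intros x Hw.
  - subst. apply Hid.
  - destruct Hw as [_ [Hs Hw]]. destruct (IH _ Hw) as [H1 H2].
    destruct (edge_arrow_st d) as [D1 D2].
    destruct (Hcomp (edge_arrow d) (walk_arrow (dtgt d0 d1 d) l)) as [C1 C2]; [congruence|].
    split; congruence.
Qed.

Lemma walk_arrow_app x y z l1 l2 : walk T d0 d1 x y l1 -> walk T d0 d1 y z l2 ->
  walk_arrow x (l1 ++ l2) = comp (walk_arrow x l1) (walk_arrow y l2).
Proof.
  revert x. induction l1 as [|d l IH]; simpl; intros x H1 H2.
  - subst. symmetry. apply comp_id_l, (walk_arrow_st _ _ _ H2).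
  - destruct H1 as [_ [Hs Hw]]. rewrite (IH _ Hw H2).
    destruct (walk_arrow_st _ _ _ Hw) as [P1 P2]. destruct (walk_arrow_st _ _ _ H2) as [Q1 Q2].
    destruct (edge_arrow_st d) as [D1 D2].
    symmetry. apply Hassoc; congruence.
Qed.

Definition flip (d : E * bool) : E * bool := (fst d, negb (snd d)).

Lemma flip_src d : dsrc d0 d1 (flip d) = dtgt d0 d1 d.
Proof. destruct d as [a []]; reflexivity. Qed.

Lemma flip_tgt d : dtgt d0 d1 (flip d) = dsrc d0 d1 d.
Proof. destruct d as [a []]; reflexivity. Qed.

Lemma edge_arrow_flip d : comp (edge_arrow d) (edge_arrow (flip d)) = idm (dsrc d0 d1 d).
Proof.
  rewrite <- (proj1 (edge_arrow_st d)).
  destruct d as [a []]; unfold edge_arrow, flip; simpl; [apply Hinv|].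
  rewrite (proj2 (proj2 (proj2 (Hinv _)))). f_equal. symmetry. apply (proj1 (Hinv _)).
Qed.

Definition walk_rev (l : list (E * bool)) : list (E * bool) := rev (map flip l).

Lemma walk_rev_walk x y l : walk T d0 d1 x y l -> walk T d0 d1 y x (walk_rev l).
Proof.
  revert x. induction l as [|d l IH]; simpl; intros x Hw.
  - subst. reflexivity.
  - destruct Hw as [HT [Hs Hw]]. unfold walk_rev. simpl. eapply walk_app; [apply IH, Hw|].
    simpl. rewrite flip_src, flip_tgt. auto.
Qed.

Lemma walk_arrow_rev x y l : walk T d0 d1 x y l ->
  comp (walk_arrow x l) (walk_arrow y (walk_rev l)) = idm x.
Proof.
  revert x. induction l as [|d l IH]; simpl; intros x Hw.
  - subst y. apply comp_id_l, Hid.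
  - destruct Hw as [HT [Hs Hw]]. set (w := dtgt d0 d1 d) in *.
    assert (Wr : walk T d0 d1 y w (walk_rev l)) by (apply walk_rev_walk, Hw).
    assert (Wf : walk T d0 d1 w x (flip d :: nil)).
    { simpl. rewrite flip_src, flip_tgt. auto. }
    unfold walk_rev. simpl. fold (walk_rev l). rewrite (walk_arrow_app _ _ _ _ _ Wr Wf). simpl.
    rewrite flip_tgt, Hs.
    destruct (walk_arrow_st _ _ _ Hw) as [P1 P2]. destruct (walk_arrow_st _ _ _ Wr) as [R1 R2].
    destruct (edge_arrow_st d) as [D1 D2]. destruct (edge_arrow_st (flip d)) as [F1 F2].
    rewrite flip_src in F1. rewrite flip_tgt in F2. fold w in D2, F1.
    rewrite (comp_id_r (edge_arrow (flip d)) x) by congruence.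
    assert (HRF : s (comp (walk_arrow y (walk_rev l)) (edge_arrow (flip d))) = y).
    { rewrite (proj1 (Hcomp _ _ (eq_trans R2 (eq_sym F1)))). exact R1. }
    rewrite Hassoc, <- (Hassoc (walk_arrow w l)), IH by (auto; congruence).
    rewrite comp_id_l, edge_arrow_flip by congruence. now rewrite Hs.
Qed.

Lemma split_first (e : E) (l : list (E * bool)) :
  (forall d, In d l -> fst d <> e) \/
  exists m d r, l = m ++ d :: r /\ fst d = e /\ (forall d', In d' m -> fst d' <> e).
Proof.
  induction l as [|d l IH]; [left; intros d []|].
  destruct (classic (fst d = e)) as [He|He].
  - right. exists nil, d, l. repeat split; auto.
  - destruct IH as [IH|[m [d' [r [-> [H1 H2]]]]]].
    + left. intros d' [<-|Hd]; auto.
    + right. exists (d :: m), d', r. repeat split; auto. intros d'' [<-|Hd]; auto.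
Qed.

Lemma walk_preserves (e : E) (h : V0 -> R) (Hh : forall a, T a -> a <> e -> h (d1 a) = h (d0 a))
  x y m : walk T d0 d1 x y m -> (forall d, In d m -> fst d <> e) -> h y = h x.
Proof.
  revert x. induction m as [|d m IH]; simpl; intros x Hw Hn.
  - subst; auto.
  - destruct Hw as [HT [Hs Hw]]. rewrite (IH _ Hw) by (intros; apply Hn; auto).
    subst x. unfold dsrc, dtgt. specialize (Hh _ HT (Hn d (or_introl eq_refl))).
    destruct (snd d); auto.
Qed.

Section Potentials.
Hypothesis Hpot : forall e, T e -> exists h : V0 -> R, forall a, T a ->
  (a = e -> h (d1 a) = h (d0 a) + 1) /\ (a <> e -> h (d1 a) = h (d0 a)).

(* In a closed walk, the first edge d is later traversed back as flip d, and
   the walk between them is closed: the potential of d must come back. *)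
Lemma first_return x d l : walk T d0 d1 x x (d :: l) ->
  exists m r, l = m ++ flip d :: r /\
    walk T d0 d1 (dtgt d0 d1 d) (dtgt d0 d1 d) m /\ walk T d0 d1 x x r.
Proof.
  intros [HTe [Hsrc Hw]].
  destruct (Hpot _ HTe) as [h Hh].
  assert (Hoff : forall a, T a -> a <> fst d -> h (d1 a) = h (d0 a)) by (intros; apply Hh; auto).
  assert (Hon : h (d1 (fst d)) = h (d0 (fst d)) + 1) by (apply Hh; auto).
  destruct (split_first (fst d) l) as [Hno|[m [d' [r [-> [Hd' Hm]]]]]].
  - exfalso. pose proof (walk_preserves _ h Hoff _ _ _ Hw Hno). subst x.
    unfold dsrc, dtgt in *. destruct (snd d); lra.
  - destruct (walk_split _ _ _ _ _ _ _ _ Hw) as [Wm [_ [_ Wr]]].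
    pose proof (walk_preserves _ h Hoff _ _ _ Wm Hm) as Hhm.
    assert (Hflip : d' = flip d).
    { destruct d as [a b], d' as [a' b']. unfold flip. simpl in *. subst a'. f_equal.
      unfold dsrc, dtgt in *. simpl in *. destruct b, b'; simpl; auto; lra. }
    subst d'. rewrite flip_src in Wm. rewrite flip_tgt, Hsrc in Wr.
    exists m, r. auto.
Qed.

Lemma closed_walk_trivial : forall n l x, (length l <= n)%nat ->
  walk T d0 d1 x x l -> walk_arrow x l = idm x.
Proof.
  induction n as [|n IH]; intros l x Hlen Hw.
  - destruct l; [reflexivity|simpl in Hlen; lia].
  - destruct l as [|d l]; [reflexivity|].
    pose proof (proj1 (proj2 Hw)) as Hsrc.
    destruct (first_return x d l Hw) as [m [r [-> [Wm Wr]]]].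
    assert (Wfr : walk T d0 d1 (dtgt d0 d1 d) x (flip d :: r)).
    { simpl. rewrite flip_src, flip_tgt, Hsrc. split; [apply (proj1 Hw)|auto]. }
    simpl in Hlen |- *. rewrite length_app in Hlen. simpl in Hlen.
    rewrite (walk_arrow_app _ _ _ _ _ Wm Wfr), (IH m) by (auto; lia). simpl.
    rewrite flip_tgt, Hsrc, (IH r) by (auto; lia).
    destruct (edge_arrow_st (flip d)) as [F1 F2]. rewrite flip_src in F1. rewrite flip_tgt in F2.
    rewrite (comp_id_r (edge_arrow (flip d)) x), (comp_id_l (edge_arrow (flip d)))
      by congruence.
    now rewrite edge_arrow_flip, Hsrc.
Qed.

Lemma walk_arrow_unique x y l1 l2 : walk T d0 d1 x y l1 -> walk T d0 d1 x y l2 ->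
  walk_arrow x l1 = walk_arrow x l2.
Proof.
  intros W1 W2.
  assert (Wr : walk T d0 d1 y x (walk_rev l2)) by (apply walk_rev_walk, W2).
  assert (Hloop : comp (walk_arrow x l1) (walk_arrow y (walk_rev l2)) = idm x).
  { rewrite <- (walk_arrow_app _ _ _ _ _ W1 Wr).
    eapply closed_walk_trivial; [apply le_n|eapply walk_app; eauto]. }
  pose proof (walk_arrow_rev _ _ _ W2) as Hback.
  destruct (walk_arrow_st _ _ _ W1) as [A1 A2]. destruct (walk_arrow_st _ _ _ W2) as [B1 B2].
  destruct (walk_arrow_st _ _ _ Wr) as [R1 R2].
  set (Rw := walk_arrow y (walk_rev l2)) in *.
  assert (Hcancel : forall P, t P = y -> P = comp (comp P Rw) (inv Rw)).
  { intros P HP. destruct (Hinv Rw) as [I1 [_ [I3 _]]].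
    rewrite Hassoc by congruence. rewrite I3, R1, <- HP. symmetry. apply Hunit. }
  rewrite (Hcancel _ A2), (Hcancel _ B2), Hloop, Hback. reflexivity.
Qed.

End Potentials.
End Walks.
End Groupoid.

(** * Topological groupoids and groups *)

Section TopGroupoid.
Variables (O M : Type) (OM : Opens M) (s t : M -> O) (comp : M -> M -> M)
  (idm : O -> M) (inv : M -> M).
Hypothesis HG : is_topgroupoid OM s t comp idm inv.

Lemma comp_cont {X : Type} (OX : Opens X) (HX : is_topology OX) (f1 f2 : X -> M) :
  continuous OX OM f1 -> continuous OX OM f2 -> (forall x, t (f1 x) = s (f2 x)) ->
  continuous OX OM (fun x => comp (f1 x) (f2 x)).
Proof.
  intros H1 H2 Hst V HV.
  destruct HG as [_ [_ [_ [_ [_ [_ [_ [_ [Hcc _]]]]]]]]].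
  destruct (Hcc V HV) as [U [HU HUV]].
  apply open_of_local; auto. intros x Hx.
  assert (Ux : U (f1 x, f2 x)) by (apply (HUV (exist _ (f1 x, f2 x) (Hst x))); exact Hx).
  destruct (HU _ Ux) as [A [B [HA [HB [Ax [Bx Hall]]]]]].
  exists (fun y => A (f1 y) /\ B (f2 y)). split; [|split].
  - apply (proj1 (proj2 HX)); auto.
  - simpl in *. auto.
  - intros y [Ay By]. apply (HUV (exist _ (f1 y, f2 y) (Hst y))). simpl. apply Hall; auto.
Qed.

Section VertexGroup.
Variable (v : O).

Definition is_loop (m : M) : Prop := s m = v /\ t m = v.
Definition Mv := {m : M | is_loop m}.

Lemma Mv_eq (a b : Mv) : proj1_sig a = proj1_sig b -> a = b.
Proof. destruct a as [a Ha], b as [b Hb]. simpl. intros ->. f_equal. apply proof_irrelevance. Qed.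

Lemma loop_comp (a b : Mv) : is_loop (comp (proj1_sig a) (proj1_sig b)).
Proof.
  destruct a as [a [Ha1 Ha2]], b as [b [Hb1 Hb2]]. simpl.
  destruct HG as [_ [_ [_ [_ [Hcomp _]]]]].
  destruct (Hcomp a b) as [H1 H2]; [congruence|].
  split; congruence.
Qed.
Definition mulV (a b : Mv) : Mv := exist _ _ (loop_comp a b).

Lemma loop_inv (a : Mv) : is_loop (inv (proj1_sig a)).
Proof.
  destruct a as [a [Ha1 Ha2]]. simpl.
  destruct HG as [_ [_ [_ [_ [_ [_ [_ [Hinv _]]]]]]]].
  destruct (Hinv a) as [H1 [H2 _]].
  split; congruence.
Qed.
Definition invV (a : Mv) : Mv := exist _ _ (loop_inv a).

Lemma loop_id : is_loop (idm v).
Proof. destruct HG as [_ [_ [_ [Hid _]]]]. apply Hid. Qed.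
Definition eV : Mv := exist _ _ loop_id.

Lemma vertex_topgroup : is_topgroup (sub_open OM is_loop) mulV invV eV.
Proof.
  destruct HG as [HtopM [_ [_ [Hid [Hcomp [Hassoc [Hunit [Hinv [Hcc Hinvc]]]]]]]]].
  split; [apply sub_topology, HtopM|].
  split; [|split; [|split; [|split]]].
  - intros [x [x1 x2]] [y [y1 y2]] [z [z1 z2]]. apply Mv_eq. simpl. apply Hassoc; congruence.
  - intros [x [x1 x2]]. split; apply Mv_eq; simpl; [rewrite <- x1|rewrite <- x2]; apply Hunit.
  - intros [x [x1 x2]]. split; apply Mv_eq; simpl; [rewrite <- x1|rewrite <- x2]; apply Hinv.
  - intros W [U0 [HU0 E0]] [a b] Hab. simpl in Hab. apply E0 in Hab. simpl in Hab.
    destruct (Hcc U0 HU0) as [U1 [HU1 E1]].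
    assert (Hcomposable : forall x y : Mv, t (proj1_sig x) = s (proj1_sig y)).
    { intros [x [x1 x2]] [y [y1 y2]]. simpl. congruence. }
    assert (U1ab : U1 (proj1_sig a, proj1_sig b))
      by (apply (E1 (exist _ (proj1_sig a, proj1_sig b) (Hcomposable a b))); exact Hab).
    destruct (HU1 _ U1ab) as [A [B [HA [HB [Aa [Bb Hall]]]]]].
    exists (fun x : Mv => A (proj1_sig x)), (fun x : Mv => B (proj1_sig x)).
    split; [exists A; split; auto; intro; tauto|].
    split; [exists B; split; auto; intro; tauto|].
    split; [exact Aa|]. split; [exact Bb|]. intros x y Ax By. apply E0. simpl.
    apply (E1 (exist _ (proj1_sig x, proj1_sig y) (Hcomposable x y))). simpl. apply Hall; auto.
  - apply cont_into_sub. simpl. apply (cont_comp _ _ _ _ inv (cont_val OM is_loop) Hinvc).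
Qed.

End VertexGroup.
End TopGroupoid.

Lemma group_inv_unique {G : Type} (OG : Opens G) mul (inv : G -> G) e :
  is_topgroup OG mul inv e -> forall x y, mul x y = e -> y = inv x.
Proof.
  intros [_ [Hassoc [Hunit [Hinv _]]]] x y Hxy.
  rewrite <- (proj1 (Hunit y)), <- (proj2 (Hinv x)), Hassoc, Hxy. apply Hunit.
Qed.

Lemma topgroup_groupoid {G : Type} (OG : Opens G) mul (inv : G -> G) e :
  is_topgroup OG mul inv e ->
  is_topgroupoid OG (fun _ => tt) (fun _ => tt) mul (fun _ : unit => e) inv.
Proof.
  intros HGr. pose proof (cont_to_unit OG (proj1 HGr)) as Htt.
  destruct HGr as [Htop [Hassoc [Hunit [Hinv [Hmul Hinvc]]]]].
  split; [exact Htop|]. split; [exact Htt|]. split; [exact Htt|].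
  split; [intros []; split; reflexivity|]. split; [intros; split; reflexivity|].
  split; [intros; apply Hassoc|]. split; [intros; apply Hunit|].
  split; [intros f; split; [reflexivity|split; [reflexivity|apply Hinv]]|].
  split; [|exact Hinvc].
  intros V HV. exists (fun p => V (mul (fst p) (snd p))). split; [apply Hmul, HV|].
  intro z. tauto.
Qed.

(** * The vertex group of the free Top-groupoid *)

Section Main.
Variables (V0 E : Type) (OE : Opens E) (d0 d1 : E -> V0).
Hypothesis Hgraph : is_topgraph OE d0 d1.
Variables (T : E -> Prop).
Hypothesis HT : maximal_tree OE d0 d1 T.
Variable (v : V0).
Variables (M : Type) (OM : Opens M) (s t : M -> V0) (comp : M -> M -> M)
  (idm : V0 -> M) (inv : M -> M) (sigma : E -> M).
Hypothesis Hfree : is_free_topgroupoid OE d0 d1 OM s t comp idm inv sigma.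
Variables (Q : Type) (OQ : Opens Q) (q : E -> Q).
Hypothesis Hq : is_collapse OE T OQ q.
Variable (star : Q).
Hypothesis Hstar : exists t0, T t0 /\ q t0 = star.
Variables (F : Type) (OF : Opens F) (mulF : F -> F -> F) (invF : F -> F) (eF : F)
  (sigmaF : Q -> F).
Hypothesis HF : is_free_graev OQ star OF mulF invF eF sigmaF.

Lemma M_topgroupoid : is_topgroupoid OM s t comp idm inv.
Proof. apply Hfree. Qed.
Lemma M_id : forall x, s (idm x) = x /\ t (idm x) = x.
Proof. apply M_topgroupoid. Qed.
Lemma M_comp : forall f g, t f = s g -> s (comp f g) = s f /\ t (comp f g) = t g.
Proof. apply M_topgroupoid. Qed.
Lemma M_assoc : forall f g h, t f = s g -> t g = s h -> comp (comp f g) h = comp f (comp g h).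
Proof. apply M_topgroupoid. Qed.
Lemma M_unit : forall f, comp (idm (s f)) f = f /\ comp f (idm (t f)) = f.
Proof. apply M_topgroupoid. Qed.
Lemma M_inv : forall f, s (inv f) = t f /\ t (inv f) = s f /\
  comp f (inv f) = idm (s f) /\ comp (inv f) f = idm (t f).
Proof. apply M_topgroupoid. Qed.
Lemma sigma_ends : forall a, s (sigma a) = d0 a /\ t (sigma a) = d1 a.
Proof. apply Hfree. Qed.

Lemma inv_st m : s (inv m) = t m /\ t (inv m) = s m.
Proof. destruct (M_inv m) as [H1 [H2 _]]. auto. Qed.

Let arrow := walk_arrow V0 M comp idm inv E d0 d1 sigma.

Lemma arrow_st x y l : walk T d0 d1 x y l -> s (arrow x l) = x /\ t (arrow x l) = y.
Proof.
  exact (walk_arrow_st V0 M s t comp idm inv M_id M_comp M_inv E d0 d1 T sigma sigma_ends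
           x y l).
Qed.

Definition tree_path (x : V0) : M :=
  arrow v (proj1_sig (constructive_indefinite_description _
             (maximal_tree_walks _ _ _ _ _ _ HT v x))).

(* any tree walk v → x gives τ(x), since closed tree walks are trivial *)
Lemma tree_path_walk x l : walk T d0 d1 v x l -> tree_path x = arrow v l.
Proof.
  intro Hl. unfold tree_path.
  destruct (constructive_indefinite_description _ _) as [l0 Hl0]. simpl.
  exact (walk_arrow_unique V0 M s t comp idm inv M_id M_comp M_assoc M_unit M_inv E d0 d1 T sigma
           sigma_ends (maximal_tree_potential _ _ _ _ _ _ HT) v x l0 l Hl0 Hl).
Qed.

Lemma tree_path_st x : s (tree_path x) = v /\ t (tree_path x) = x.
Proof.
  unfold tree_path. destruct (constructive_indefinite_description _ _) as [l0 Hl0].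
  exact (arrow_st _ _ _ Hl0).
Qed.

Lemma tree_path_v : tree_path v = idm v.
Proof. apply (tree_path_walk v nil). reflexivity. Qed.

Lemma tree_path_edge a : T a -> tree_path (d1 a) = comp (tree_path (d0 a)) (sigma a).
Proof.
  intro Ha. destruct (maximal_tree_walks _ _ _ _ _ _ HT v (d0 a)) as [l Hl].
  assert (Hw : walk T d0 d1 (d0 a) (d1 a) ((a, true) :: nil)) by (simpl; auto).
  rewrite (tree_path_walk _ (l ++ (a, true) :: nil)) by (eapply walk_app; eauto).
  unfold arrow. rewrite (walk_arrow_app V0 M s t comp idm inv M_id M_comp M_assoc M_unit M_inv
                          E d0 d1 T sigma sigma_ends _ _ _ _ _ Hl Hw).
  rewrite (tree_path_walk _ l Hl). simpl. unfold edge_arrow, dtgt. simpl. f_equal.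
  apply (comp_id_r V0 M s t comp idm M_unit), sigma_ends.
Qed.

Lemma F_topgroup : is_topgroup OF mulF invF eF.
Proof. apply HF. Qed.

Lemma F_unit_l x : mulF eF x = x.
Proof. apply F_topgroup. Qed.

Lemma F_unit_r x : mulF x eF = x.
Proof. apply F_topgroup. Qed.

Lemma collapse_morphism : graph_morphism OE d0 d1 OF (fun _ : F => tt) (fun _ => tt)
  (fun _ : V0 => tt) (fun a => sigmaF (q a)).
Proof.
  split; [|auto]. apply (cont_comp _ OQ _ q sigmaF); [|apply HF].
  intros V HV. apply (proj2 (proj1 Hq)), HV.
Qed.

Definition Phi_ex := proj2 (proj2 Hfree) unit F OF (fun _ => tt) (fun _ => tt) mulF
  (fun _ => eF) invF (topgroup_groupoid OF mulF invF eF F_topgroup) (fun _ => tt)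
  (fun a => sigmaF (q a)) collapse_morphism.
Definition Phi : M -> F := proj1_sig (constructive_indefinite_description _ Phi_ex).

Lemma Phi_spec : is_functor s t comp idm (fun _ : F => tt) (fun _ => tt) mulF (fun _ => eF)
  (fun _ => tt) Phi /\ continuous OM OF Phi /\ (forall a, Phi (sigma a) = sigmaF (q a)).
Proof.
  unfold Phi. destruct (proj2_sig (constructive_indefinite_description _ Phi_ex))
    as [H1 [H2 [H3 _]]]. auto.
Qed.

Lemma Phi_comp f g : t f = s g -> Phi (comp f g) = mulF (Phi f) (Phi g).
Proof. apply Phi_spec. Qed.
Lemma Phi_id x : Phi (idm x) = eF.
Proof. apply Phi_spec. Qed.
Lemma Phi_cont : continuous OM OF Phi.
Proof. apply Phi_spec. Qed.
Lemma Phi_sig a : Phi (sigma a) = sigmaF (q a).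
Proof. apply Phi_spec. Qed.

Lemma Phi_inv m : Phi (inv m) = invF (Phi m).
Proof.
  apply (group_inv_unique _ _ _ _ F_topgroup). rewrite <- Phi_comp by (symmetry; apply M_inv).
  rewrite (proj1 (proj2 (proj2 (M_inv m)))). apply Phi_id.
Qed.

Lemma Phi_tree_edge a : T a -> Phi (sigma a) = eF.
Proof.
  intro Ha. rewrite Phi_sig. destruct Hstar as [t0 [Ht0 Hq0]].
  replace (q a) with (q t0) by (apply (proj2 Hq); auto). rewrite Hq0. apply HF.
Qed.

Lemma Phi_walk x y l : walk T d0 d1 x y l -> Phi (arrow x l) = eF.
Proof.
  revert x. induction l as [|d l IH]; intros x Hw; simpl; [apply Phi_id|].
  destruct Hw as [Hd [Hsrc Hw]].
  rewrite Phi_comp, IH, F_unit_r by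
    (auto; rewrite (proj2 (edge_arrow_st V0 M s t comp idm inv M_inv E d0 d1 sigma sigma_ends d));
     symmetry; exact (proj1 (arrow_st _ _ _ Hw))).
  unfold edge_arrow. destruct (snd d); [apply Phi_tree_edge, Hd|].
  rewrite Phi_inv, Phi_tree_edge by exact Hd.
  symmetry. apply (group_inv_unique _ _ _ _ F_topgroup), F_unit_l.
Qed.

Lemma Phi_tree_path x : Phi (tree_path x) = eF.
Proof.
  unfold tree_path. destruct (constructive_indefinite_description _ _) as [l Hl].
  exact (Phi_walk _ _ _ Hl).
Qed.

Let Gv := Mv V0 M s t v.
Let loop := is_loop V0 M s t v.
Let mulGv := mulV V0 M OM s t comp idm inv M_topgroupoid v.

Lemma edge_loop_pf a : loop (comp (tree_path (d0 a)) (comp (sigma a) (inv (tree_path (d1 a))))).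
Proof.
  destruct (tree_path_st (d0 a)) as [A1 A2]. destruct (tree_path_st (d1 a)) as [B1 B2].
  destruct (sigma_ends a) as [S1 S2]. destruct (inv_st (tree_path (d1 a))) as [I1 I2].
  destruct (M_comp (sigma a) (inv (tree_path (d1 a)))) as [C1 C2]; [congruence|].
  destruct (M_comp (tree_path (d0 a)) (comp (sigma a) (inv (tree_path (d1 a))))) as [D1 D2];
    [congruence|].
  split; congruence.
Qed.

Definition edge_loop (a : E) : Gv := exist _ _ (edge_loop_pf a).

(* for tree edges this loop is trivial, since τ(d1 a) = τ(d0 a) σ(a) *)
Lemma edge_loop_tree a : T a -> edge_loop a = eV V0 M OM s t comp idm inv M_topgroupoid v.
Proof.
  intro Ha. apply Mv_eq. simpl. rewrite (tree_path_edge a Ha).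
  destruct (tree_path_st (d0 a)) as [A1 A2]. destruct (sigma_ends a) as [S1 S2].
  destruct (M_comp (tree_path (d0 a)) (sigma a)) as [C1 C2]; [congruence|].
  destruct (inv_st (comp (tree_path (d0 a)) (sigma a))) as [I1 _].
  rewrite <- M_assoc by congruence.
  rewrite (proj1 (proj2 (proj2 (M_inv _)))). now rewrite C1, A1.
Qed.

Lemma sigma_then_back a : t (sigma a) = s (inv (tree_path (d1 a))).
Proof. rewrite (proj1 (inv_st _)), (proj2 (sigma_ends a)). symmetry. apply tree_path_st. Qed.

(* a ↦ τ(d0 a) σ(a) τ(d1 a)⁻¹ is continuous, τ being constant on the
   clopen sets where d0, d1 are constant *)
Lemma edge_loop_cont : continuous OE OM (fun a => proj1_sig (edge_loop a)).
Proof.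
  pose proof (proj1 Hgraph) as HtopE. simpl.
  apply (comp_cont _ _ _ _ _ _ _ _ M_topgroupoid OE HtopE).
  - apply (cont_through_discrete OE OM d0 tree_path), Hgraph.
  - apply (comp_cont _ _ _ _ _ _ _ _ M_topgroupoid OE HtopE); [apply Hfree| |apply sigma_then_back].
    apply (cont_through_discrete OE OM d1 (fun x => inv (tree_path x))), Hgraph.
  - intro a. rewrite (proj1 (M_comp _ _ (sigma_then_back a))), (proj1 (sigma_ends a)).
    apply tree_path_st.
Qed.

Definition collapsed_loop (y : Q) : Gv :=
  edge_loop (proj1_sig (constructive_indefinite_description _ (proj1 (proj1 Hq) y))).

(* well defined on Γ/T because all tree edges give the trivial loop *)
Lemma collapsed_loop_q a : collapsed_loop (q a) = edge_loop a.
Proof.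
  unfold collapsed_loop. destruct (constructive_indefinite_description _ _) as [a' Ha'].
  simpl. apply (proj2 Hq) in Ha'. destruct Ha' as [->|[H1 H2]]; [reflexivity|].
  rewrite !edge_loop_tree; auto.
Qed.

Lemma collapsed_loop_cont : continuous OQ (sub_open OM loop) collapsed_loop.
Proof.
  apply cont_into_sub. intros V HV. apply (proj2 (proj1 Hq)).
  apply (open_ext _ _ _ (edge_loop_cont V HV)). intro a. rewrite collapsed_loop_q. tauto.
Qed.

Lemma collapsed_loop_star : collapsed_loop star = eV V0 M OM s t comp idm inv M_topgroupoid v.
Proof. destruct Hstar as [t0 [Ht0 <-]]. rewrite collapsed_loop_q. apply edge_loop_tree, Ht0. Qed.

Definition Psi_ex := proj2 (proj2 (proj2 HF)) Gv (sub_open OM loop) mulGv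
  (invV V0 M OM s t comp idm inv M_topgroupoid v) (eV V0 M OM s t comp idm inv M_topgroupoid v)
  (vertex_topgroup V0 M OM s t comp idm inv M_topgroupoid v)
  collapsed_loop collapsed_loop_cont collapsed_loop_star.
Definition psi : F -> Gv := proj1_sig (constructive_indefinite_description _ Psi_ex).

Lemma psi_spec : group_hom mulF mulGv psi /\ continuous OF (sub_open OM loop) psi /\
  (forall y, psi (sigmaF y) = collapsed_loop y).
Proof.
  unfold psi. destruct (proj2_sig (constructive_indefinite_description _ Psi_ex))
    as [H1 [H2 [H3 _]]]. auto.
Qed.

Lemma psi_hom x y : psi (mulF x y) = mulGv (psi x) (psi y).
Proof. apply psi_spec. Qed.
Lemma psi_cont : continuous OF (sub_open OM loop) psi.
Proof. apply psi_spec. Qed.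
Lemma psi_sig y : psi (sigmaF y) = collapsed_loop y.
Proof. apply psi_spec. Qed.

Lemma psi_e : proj1_sig (psi eF) = idm v.
Proof.
  destruct (psi eF) as [p [H1 H2]] eqn:Ee. simpl.
  apply (idempotent_is_id V0 M s t comp idm inv M_assoc M_unit M_inv); auto.
  assert (E2 : psi (mulF eF eF) = mulGv (psi eF) (psi eF)) by apply psi_hom.
  rewrite F_unit_l, Ee in E2. apply (f_equal (@proj1_sig _ _)) in E2. symmetry. exact E2.
Qed.

Definition Psi_Phi (m : M) : M := proj1_sig (psi (Phi m)).

Lemma Psi_Phi_st m : s (Psi_Phi m) = v /\ t (Psi_Phi m) = v.
Proof. unfold Psi_Phi. apply (proj2_sig (psi (Phi m))). Qed.

Definition rebuild (m : M) : M :=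
  comp (inv (tree_path (s m))) (comp (Psi_Phi m) (tree_path (t m))).

Lemma rebuild_st m : s (rebuild m) = s m /\ t (rebuild m) = t m.
Proof.
  unfold rebuild. destruct (Psi_Phi_st m) as [P1 P2].
  destruct (tree_path_st (s m)) as [A1 A2]. destruct (tree_path_st (t m)) as [B1 B2].
  destruct (inv_st (tree_path (s m))) as [I1 I2].
  destruct (M_comp (Psi_Phi m) (tree_path (t m))) as [C1 C2]; [congruence|].
  destruct (M_comp (inv (tree_path (s m))) (comp (Psi_Phi m) (tree_path (t m)))) as [D1 D2];
    [congruence|].
  split; congruence.
Qed.

Lemma rebuild_id x : rebuild (idm x) = idm x.
Proof.
  unfold rebuild, Psi_Phi. rewrite Phi_id, psi_e. destruct (M_id x) as [H1 H2]. rewrite H1, H2.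
  destruct (tree_path_st x) as [A1 A2].
  rewrite (comp_id_l V0 M s t comp idm M_unit) by exact A1.
  rewrite (proj2 (proj2 (proj2 (M_inv _)))). now rewrite A2.
Qed.

Lemma rebuild_comp f g : t f = s g -> rebuild (comp f g) = comp (rebuild f) (rebuild g).
Proof.
  intro Hfg. destruct (M_comp f g Hfg) as [C1 C2].
  unfold rebuild. rewrite C1, C2, <- Hfg.
  assert (HP : Psi_Phi (comp f g) = comp (Psi_Phi f) (Psi_Phi g)).
  { unfold Psi_Phi. rewrite Phi_comp, psi_hom by exact Hfg. reflexivity. }
  rewrite HP.
  destruct (Psi_Phi_st f) as [B1 B2]. destruct (Psi_Phi_st g) as [B'1 B'2].
  destruct (tree_path_st (s f)) as [A1 A2]. destruct (tree_path_st (t f)) as [Cc1 Cc2].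
  destruct (tree_path_st (t g)) as [C'1 C'2].
  destruct (inv_st (tree_path (s f))) as [I1 I2]. destruct (inv_st (tree_path (t f))) as [J1 J2].
  set (A := inv (tree_path (s f))) in *. set (B := Psi_Phi f) in *.
  set (Cc := tree_path (t f)) in *. set (B' := Psi_Phi g) in *. set (C' := tree_path (t g)) in *.
  assert (Z1 : s (comp B' C') = v) by (rewrite (proj1 (M_comp B' C' ltac:(congruence))); auto).
  assert (Z2 : t (comp B' C') = t g) by (rewrite (proj2 (M_comp B' C' ltac:(congruence))); auto).
  assert (Y1 : s (comp B Cc) = v) by (rewrite (proj1 (M_comp B Cc ltac:(congruence))); auto).
  assert (Y2 : t (comp B Cc) = t f) by (rewrite (proj2 (M_comp B Cc ltac:(congruence))); auto).
  assert (X1 : s (comp (inv Cc) (comp B' C')) = t f)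
    by (rewrite (proj1 (M_comp (inv Cc) (comp B' C') ltac:(congruence))); congruence).
  (* τ(t f) τ(t f)⁻¹ cancels in the middle *)
  rewrite (M_assoc B B' C'), (M_assoc A (comp B Cc)), (M_assoc B Cc) by congruence.
  rewrite <- (M_assoc Cc (inv Cc)) by congruence.
  rewrite (proj1 (proj2 (proj2 (M_inv Cc)))), Cc1, <- Z1.
  now rewrite (proj1 (M_unit _)).
Qed.

Lemma rebuild_cont : continuous OM OM rebuild.
Proof.
  pose proof (proj1 M_topgroupoid) as HtopM. unfold rebuild.
  apply (comp_cont _ _ _ _ _ _ _ _ M_topgroupoid OM HtopM).
  - apply (cont_through_discrete OM OM s (fun x => inv (tree_path x))), M_topgroupoid.
  - apply (comp_cont _ _ _ _ _ _ _ _ M_topgroupoid OM HtopM).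
    + unfold Psi_Phi.
      apply (cont_comp OM (sub_open OM loop) OM (fun m => psi (Phi m)) (@proj1_sig _ _));
        [apply (cont_comp _ _ _ Phi psi Phi_cont psi_cont)|apply cont_val].
    + apply (cont_through_discrete OM OM t tree_path), M_topgroupoid.
    + intro m. destruct (Psi_Phi_st m). destruct (tree_path_st (t m)). congruence.
  - intro m. rewrite (proj2 (inv_st _)).
    destruct (Psi_Phi_st m) as [P1 P2]. destruct (tree_path_st (s m)) as [A1 _].
    destruct (tree_path_st (t m)) as [B1 _].
    rewrite (proj1 (M_comp (Psi_Phi m) (tree_path (t m)) ltac:(congruence))). congruence.
Qed.

Lemma rebuild_sig a : rebuild (sigma a) = sigma a.
Proof.
  unfold rebuild, Psi_Phi. rewrite Phi_sig, psi_sig, collapsed_loop_q. simpl.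
  destruct (sigma_ends a) as [S1 S2]. rewrite S1, S2.
  set (t0 := tree_path (d0 a)). set (t1 := tree_path (d1 a)).
  destruct (tree_path_st (d0 a)) as [A1 A2]. destruct (tree_path_st (d1 a)) as [B1 B2].
  fold t0 in A1, A2. fold t1 in B1, B2.
  destruct (inv_st t1) as [I1 I2]. destruct (inv_st t0) as [J1 J2].
  assert (W1 : s (comp (sigma a) (inv t1)) = d0 a)
    by (rewrite (proj1 (M_comp (sigma a) (inv t1) ltac:(congruence))); auto).
  assert (W2 : t (comp (sigma a) (inv t1)) = v)
    by (rewrite (proj2 (M_comp (sigma a) (inv t1) ltac:(congruence))); congruence).
  rewrite (M_assoc t0), (M_assoc (sigma a)) by congruence.
  rewrite (proj2 (proj2 (proj2 (M_inv t1)))), B2, <- S2, (proj2 (M_unit _)).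
  rewrite <- M_assoc by congruence.
  rewrite (proj2 (proj2 (proj2 (M_inv t0)))), A2, <- S1. apply M_unit.
Qed.

(* by uniqueness in the universal property of the free Top-groupoid *)
Lemma rebuild_is_id m : rebuild m = m.
Proof.
  destruct (proj2 (proj2 Hfree) V0 M OM s t comp idm inv M_topgroupoid (fun x => x) sigma
              (proj1 (proj2 Hfree))) as [F0 [_ [_ [_ Huniq]]]].
  rewrite (Huniq rebuild), (Huniq (fun m => m)); auto.
  - split; [|split]; intros; auto.
  - intros V HV. exact HV.
  - split; [|split]; [apply rebuild_st|apply rebuild_comp|apply rebuild_id].
  - apply rebuild_cont.
  - apply rebuild_sig.
Qed.

(* on loops at v, τ(v) = id and [rebuild] is ψ ∘ Φ *)
Lemma psi_Phi (a : Gv) : psi (Phi (proj1_sig a)) = a.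
Proof.
  destruct a as [a [a1 a2]]. apply Mv_eq. simpl.
  pose proof (rebuild_is_id a) as Hr. unfold rebuild in Hr.
  rewrite a1, a2, tree_path_v, (inv_idm V0 M s t comp idm inv M_id M_unit M_inv) in Hr.
  destruct (Psi_Phi_st a) as [P1 P2].
  rewrite (comp_id_r V0 M s t comp idm M_unit (Psi_Phi a) v P2),
          (comp_id_l V0 M s t comp idm M_unit (Psi_Phi a) v P1) in Hr. exact Hr.
Qed.

(* by uniqueness in the universal property of the free Graev group *)
Lemma Phi_psi (y : F) : Phi (proj1_sig (psi y)) = y.
Proof.
  destruct (proj2 (proj2 (proj2 HF)) F OF mulF invF eF F_topgroup sigmaF (proj1 (proj2 HF))
       (proj1 (proj2 (proj2 HF)))) as [phi0 [_ [_ [_ Huniq]]]].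
  rewrite (Huniq (fun y => Phi (proj1_sig (psi y)))), (Huniq (fun y => y)); auto.
  - intros x1 x2. reflexivity.
  - intros V HV. exact HV.
  - intros x1 x2. rewrite psi_hom. simpl. apply Phi_comp.
    destruct (proj2_sig (psi x1)). destruct (proj2_sig (psi x2)). congruence.
  - apply (cont_comp _ _ _ psi (fun m => Phi (proj1_sig m)) psi_cont).
    apply (cont_comp _ _ _ (@proj1_sig _ _) Phi (cont_val OM loop) Phi_cont).
  - intro y0. rewrite psi_sig. destruct (proj1 (proj1 Hq) y0) as [a <-].
    rewrite collapsed_loop_q. simpl.
    destruct (tree_path_st (d0 a)) as [A1 A2].
    rewrite Phi_comp, Phi_comp, Phi_inv, !Phi_tree_path, Phi_sig, F_unit_l;
      [|apply sigma_then_back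
       |rewrite (proj1 (M_comp _ _ (sigma_then_back a))), (proj1 (sigma_ends a)); auto].
    replace (invF eF) with eF by (apply (group_inv_unique _ _ _ _ F_topgroup), F_unit_l).
    apply F_unit_r.
Qed.

Lemma vertex_group_iso :
  exists (phi : Gv -> F) (psi : F -> Gv),
    (forall a b c : Gv, proj1_sig c = comp (proj1_sig a) (proj1_sig b) ->
       phi c = mulF (phi a) (phi b)) /\
    (forall a, psi (phi a) = a) /\ (forall y, phi (psi y) = y) /\
    continuous (sub_open OM loop) OF phi /\ continuous OF (sub_open OM loop) psi.
Proof.
  exists (fun m => Phi (proj1_sig m)), psi.
  split; [|split; [exact psi_Phi|split; [exact Phi_psi|split; [|exact psi_cont]]]].
  - intros [a [a1 a2]] [b [b1 b2]] c Hc. simpl in Hc |- *. rewrite Hc.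
    apply Phi_comp. now rewrite a2, b1.
  - apply (cont_comp _ _ _ (@proj1_sig _ _) Phi (cont_val OM loop) Phi_cont).
Qed.

End Main.

Theorem theorem3p6
  (V0 E : Type) (OE : Opens E) (d0 d1 : E -> V0)
  (Hgraph : is_topgraph OE d0 d1)
  (Hconn : graph_connected OE d0 d1)
  (Hmore : exists x y : V0, x <> y)
  (T : E -> Prop) (HT : maximal_tree OE d0 d1 T)
  (v : V0)
  (M : Type) (OM : Opens M) (s t : M -> V0) (comp : M -> M -> M)
  (idm : V0 -> M) (inv : M -> M) (sigma : E -> M)
  (Hfree : is_free_topgroupoid OE d0 d1 OM s t comp idm inv sigma)
  (Q : Type) (OQ : Opens Q) (q : E -> Q) (Hq : is_collapse OE T OQ q)
  (star : Q) (Hstar : exists t0, T t0 /\ q t0 = star)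
  (F : Type) (OF : Opens F) (mulF : F -> F -> F) (invF : F -> F) (eF : F)
  (sigmaF : Q -> F) (HF : is_free_graev OQ star OF mulF invF eF sigmaF) :
  exists (phi : {m : M | s m = v /\ t m = v} -> F)
         (psi : F -> {m : M | s m = v /\ t m = v}),
    (forall a b c : {m : M | s m = v /\ t m = v},
       proj1_sig c = comp (proj1_sig a) (proj1_sig b) ->
       phi c = mulF (phi a) (phi b)) /\
    (forall a, psi (phi a) = a) /\ (forall y, phi (psi y) = y) /\
    continuous (sub_open OM (fun m => s m = v /\ t m = v)) OF phi /\
    continuous OF (sub_open OM (fun m => s m = v /\ t m = v)) psi.
Proof.
  exact (vertex_group_iso V0 E OE d0 d1 Hgraph T HT v M OM s t comp idm inv sigma Hfree
           Q OQ q Hq star Hstar F OF mulF invF eF sigmaF HF).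
Qed.
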